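(* Let $x>0$ and $t>0$ be real numbers. For $n\in\mathbb{N}$ and $\omega=\omega_1\cdots\omega_n\in\{-1,1\}^n$ define, for $0\le k\le n$, \[ S_k(\omega):=x+\frac{\sqrt{t}}{\sqrt{n}}\sum_{i=1}^k\omega_i \] (so $S_0(\omega)=x$; note the normalisation is $\sqrt{n}$, not $\sqrt{k}$). Let $A_n:=\{\omega\in\{-1,1\}^n:\ S_k(\omega)>0 \text{ for all } 1\le k\le n\}$, and equip $A_n$ with the uniform probability measure $\mathbb{P}_n$; this is a fair coin tossed exactly $n$ times, conditioned on the walk $S_k$ staying strictly positive. Then for all extended real numbers $a<b$ with $(a,b)\subset[0,\infty]$, \[ \lim_{n\to\infty}\mathbb{P}_n\big(a\le S_n\le b\big)=\frac{\int_a^b H(t,x,y)\,dy}{\int_0^\infty H(t,x,y)\,dy}, \] where $H(t,x,y):=G(t,x,y)-G(t,x,-y)$ and $G(t,x,y):=\frac{1}{\sqrt{2\pi t}}\exp\!\big(-\frac{(y-x)^2}{2t}\big)$.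
   Context: Here $1$ stands for heads and $-1$ for tails. $\mathbb{P}_n(a\le S_n\le b)=|\{\omega\in A_n: a\le S_n(\omega)\le b\}|/|A_n|$ (note $A_n\neq\emptyset$ since the all-heads sequence lies in $A_n$). *)

From Stdlib Require Import Reals Lra List.
Import ListNotations.
Open Scope R_scope.

Fixpoint coin_seqs (n : nat) : list (list R) :=
  match n with
  | O => [ [] ]
  | S m => flat_map (fun w => [1 :: w; (-1) :: w]) (coin_seqs m)
  end.

Definition walk (x t : R) (n : nat) (w : list R) (k : nat) : R :=
  x + sqrt t / sqrt (INR n) * fold_right Rplus 0 (firstn k w).

Definition Rltb (a b : R) : bool := if Rlt_dec a b then true else false.
Definition Rleb (a b : R) : bool := if Rle_dec a b then true else false.

Definition in_A (x t : R) (n : nat) (w : list R) : bool :=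
  forallb (fun k => Rltb 0 (walk x t n w k)) (seq 1 n).

Definition A_n (x t : R) (n : nat) : list (list R) :=
  filter (in_A x t n) (coin_seqs n).

(* Upper endpoint in (-oo, +oo]: [None] stands for +oo. *)
Definition in_range (a : R) (b : option R) (s : R) : bool :=
  Rleb a s && match b with None => true | Some b' => Rleb s b' end.

Definition Pn (x t : R) (n : nat) (a : R) (b : option R) : R :=
  INR (length (filter (fun w => in_range a b (walk x t n w n)) (A_n x t n)))
  / INR (length (A_n x t n)).

Definition G (t x y : R) : R :=
  / sqrt (2 * PI * t) * exp (- (y - x) ^ 2 / (2 * t)).

Definition H (t x y : R) : R := G t x y - G t x (- y).

Definition is_RInt (f : R -> R) (a b I : R) : Prop :=
  exists pr : Riemann_integrable f a b, RiemannInt pr = I.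

Definition is_RInt_infty (f : R -> R) (a I : R) : Prop :=
  forall eps : R, eps > 0 -> exists M : R, forall B : R, B >= M ->
    exists J : R, is_RInt f a B J /\ Rabs (J - I) < eps.

Definition is_RInt_ext (f : R -> R) (a : R) (b : option R) (I : R) : Prop :=
  match b with
  | Some b' => is_RInt f a b' I
  | None => is_RInt_infty f a I
  end.

Definition ext_lt (a : R) (b : option R) : Prop :=
  match b with Some b' => a < b' | None => True end.

(* The walks that stay positive are counted by the reflection principle: if [-h] is the
   first integer level at which [x + step t n * S] is no longer positive, they are the
   unconstrained walks from [x] minus those from [mirror x t n], the reflection of [x] in
   that level. So [Pn] is a ratio of two such differences. Divide every count by the
   central coefficient [binom n (n / 2)]; the factor cancels in the ratio. Expanding [ln] of consecutive binomial ratios gives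
   [binom n i / binom n (n / 2) = exp (- (2 i - n) ^ 2 / (2 n) + o(1))] uniformly on
   windows [|2 i - n| <= K sqrt n], so each normalised count is a Riemann sum, of mesh
   [2 sqrt (t / n)], of the test function against [exp (- (y - y0) ^ 2 / (2 t))]. It
   converges to the integral on bounded intervals, and a geometric bound on the binomial
   tail handles [b = +oo]. As [mirror x t n] tends to [- x], the limit is the ratio of the
   integrals of [G t x y - G t (- x) y = H t x y]. *)

From Stdlib Require Import Reals Lra Lia List ZArith.
From Coquelicot Require Import Coquelicot.
Import ListNotations.
Open Scope R_scope.

(** * Sums over coin sequences and the reflection principle *)

Lemma Rleb_true a b : a <= b -> Rleb a b = true.
Proof. intros Hab; unfold Rleb; destruct Rle_dec; tauto. Qed.

Lemma Rleb_false a b : b < a -> Rleb a b = false.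
Proof. intros Hab; unfold Rleb; destruct Rle_dec; [lra | reflexivity]. Qed.

Lemma Rleb_iff a b c d : (a <= b <-> c <= d) -> Rleb a b = Rleb c d.
Proof. intros Hiff; unfold Rleb; destruct Rle_dec, Rle_dec; tauto. Qed.

Lemma forallb_map_ext {A B} (f : B -> bool) (g : A -> B) (f' : A -> bool) l :
  (forall a, f (g a) = f' a) -> forallb f (map g l) = forallb f' l.
Proof. intros Hf; induction l as [|a l IH]; simpl; [|rewrite Hf, IH]; reflexivity. Qed.

Definition sum_list (w : list R) : R := fold_right Rplus 0 w.

Definition sum_over (F : list R -> R) (l : list (list R)) : R :=
  fold_right (fun w acc => F w + acc) 0 l.

Lemma sum_list_cons a w : sum_list (a :: w) = a + sum_list w.
Proof. reflexivity. Qed.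

Lemma sum_over_ext_in F G l :
  (forall w, In w l -> F w = G w) -> sum_over F l = sum_over G l.
Proof.
  induction l as [|w l IH]; intros HFG; simpl; [reflexivity|].
  rewrite HFG, IH; auto with datatypes.
Qed.

Lemma sum_over_ext F G l : (forall w, F w = G w) -> sum_over F l = sum_over G l.
Proof. intros HFG; apply sum_over_ext_in; auto. Qed.

Lemma sum_over_0 l : sum_over (fun _ => 0) l = 0.
Proof. induction l as [|w l IH]; simpl; [|rewrite IH]; ring. Qed.

Lemma sum_over_plus F G l :
  sum_over (fun w => F w + G w) l = sum_over F l + sum_over G l.
Proof. induction l as [|w l IH]; simpl; [|rewrite IH]; ring. Qed.

Lemma sum_over_minus F G l :
  sum_over (fun w => F w - G w) l = sum_over F l - sum_over G l.
Proof. induction l as [|w l IH]; simpl; [|rewrite IH]; ring. Qed.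

Lemma sum_over_filter F (P : list R -> bool) l :
  sum_over F (filter P l) = sum_over (fun w => if P w then F w else 0) l.
Proof. induction l as [|w l IH]; simpl; [|destruct (P w); simpl; rewrite IH]; ring. Qed.

Lemma INR_length_filter (P : list R -> bool) l :
  INR (length (filter P l)) = sum_over (fun w => if P w then 1 else 0) l.
Proof.
  induction l as [|w l IH]; simpl; [reflexivity|].
  destruct (P w); simpl length; rewrite ?S_INR, IH; ring.
Qed.

Lemma sum_over_coin_seqs_S F k :
  sum_over F (coin_seqs (S k)) =
  sum_over (fun w => F (1 :: w) + F ((-1) :: w)) (coin_seqs k).
Proof.
  cbn [coin_seqs]. induction (coin_seqs k) as [|w l IH]; simpl; [|rewrite IH]; ring.
Qed.

Lemma sum_over_coin_seqs_flip k f :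
  sum_over (fun w => f (sum_list w)) (coin_seqs k) =
  sum_over (fun w => f (- sum_list w)) (coin_seqs k).
Proof.
  revert f; induction k as [|k IH]; intros f.
  - cbn. rewrite Ropp_0. reflexivity.
  - rewrite !sum_over_coin_seqs_S, !sum_over_plus, Rplus_comm.
    f_equal; [etransitivity; [apply (IH (fun s => f (-1 + s)))|] |
              etransitivity; [apply (IH (fun s => f (1 + s)))|]];
      apply sum_over_ext; intros w; rewrite sum_list_cons; f_equal; ring.
Qed.

Lemma coin_seqs_length k w : In w (coin_seqs k) -> length w = k.
Proof.
  revert w; induction k as [|k IH]; intros w Hw; cbn [coin_seqs] in Hw.
  - destruct Hw as [<-|[]]; reflexivity.
  - apply in_flat_map in Hw as [w' [Hw' Hin]].
    destruct Hin as [<-|[<-|[]]]; simpl; rewrite (IH w' Hw'); reflexivity.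
Qed.

Lemma coin_seqs_partial_sum_int k w j :
  In w (coin_seqs k) -> exists z, sum_list (firstn j w) = IZR z.
Proof.
  revert w j; induction k as [|k IH]; intros w j Hw; cbn [coin_seqs] in Hw.
  - destruct Hw as [<-|[]]. exists 0%Z. destruct j; reflexivity.
  - apply in_flat_map in Hw as [w' [Hw' Hin]].
    destruct j as [|j]; [exists 0%Z; reflexivity|].
    destruct (IH w' j Hw') as [z Hz].
    destruct Hin as [<-|[<-|[]]]; cbn [firstn]; rewrite sum_list_cons, Hz;
      [exists (1 + z)%Z | exists (-1 + z)%Z]; rewrite plus_IZR; reflexivity.
Qed.

(* The integer walk is not absorbed at level [-h] during its first [k] steps. *)
Definition stays_above (h k : nat) (w : list R) : bool :=
  forallb (fun j => Rleb (1 - INR h) (sum_list (firstn j w))) (seq 1 k).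

(* Reflection in the level [-h] maps an endpoint [s] to [-2h - s]. *)
Definition reflected (h : nat) (phi : R -> R) (s : R) : R :=
  (if Rle_dec (1 - INR h) s then phi s else 0) -
  (if Rle_dec s (-1 - INR h) then phi (-2 * INR h - s) else 0).

Lemma stays_above_cons h h' k a w :
  1 - INR h <= a -> 1 - INR h - a = 1 - INR h' ->
  stays_above h (S k) (a :: w) = stays_above h' k w.
Proof.
  intros Ha Hh'. unfold stays_above. cbn [seq forallb firstn].
  rewrite sum_list_cons. change (sum_list []) with 0.
  rewrite Rplus_0_r, Rleb_true by exact Ha. simpl andb. rewrite <- seq_shift.
  apply forallb_map_ext; intros j. cbn [firstn]. rewrite sum_list_cons.
  apply Rleb_iff; lra.
Qed.

Lemma stays_above_1_cons_down k w : stays_above 1 (S k) ((-1) :: w) = false.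
Proof. unfold stays_above; cbn. rewrite Rleb_false; [reflexivity | lra]. Qed.

Lemma reflected_up h phi s :
  reflected (S h) (fun s => phi (1 + s)) s = reflected h phi (1 + s).
Proof.
  unfold reflected. rewrite S_INR.
  replace (1 + (-2 * (INR h + 1) - s)) with (-2 * INR h - (1 + s)) by ring.
  destruct (Rle_dec (1 - (INR h + 1)) s), (Rle_dec (1 - INR h) (1 + s)); try lra;
  destruct (Rle_dec s (-1 - (INR h + 1))), (Rle_dec (1 + s) (-1 - INR h)); lra.
Qed.

Lemma reflected_down h phi s :
  reflected h (fun s => phi (-1 + s)) s = reflected (S h) phi (-1 + s).
Proof.
  unfold reflected. rewrite S_INR.
  replace (-1 + (-2 * INR h - s)) with (-2 * (INR h + 1) - (-1 + s)) by ring.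
  destruct (Rle_dec (1 - INR h) s), (Rle_dec (1 - (INR h + 1)) (-1 + s)); try lra;
  destruct (Rle_dec s (-1 - INR h)), (Rle_dec (-1 + s) (-1 - (INR h + 1))); lra.
Qed.

(* Started one step above the absorbing level, the two terms of [reflected] cancel
   by the symmetry [w -> -w]. *)
Lemma sum_reflected_at_level k phi :
  sum_over (fun w => reflected 1 phi (-1 + sum_list w)) (coin_seqs k) = 0.
Proof.
  pose (pos := fun s => if Rle_dec 1 s then phi (s - 1) else 0).
  rewrite (sum_over_ext _ (fun w => pos (sum_list w) - pos (- sum_list w))).
  - rewrite sum_over_minus, (sum_over_coin_seqs_flip k pos). ring.
  - intros w. unfold reflected, pos. simpl INR.
    replace (-2 * 1 - (-1 + sum_list w)) with (- sum_list w - 1) by ring.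
    replace (-1 + sum_list w) with (sum_list w - 1) by ring.
    destruct (Rle_dec (1 - 1) (sum_list w - 1)), (Rle_dec 1 (sum_list w)); try lra;
    destruct (Rle_dec (sum_list w - 1) (-1 - 1)), (Rle_dec 1 (- sum_list w)); lra.
Qed.

Lemma reflection_principle k h phi : (1 <= h)%nat ->
  sum_over (fun w => if stays_above h k w then phi (sum_list w) else 0) (coin_seqs k) =
  sum_over (fun w => reflected h phi (sum_list w)) (coin_seqs k).
Proof.
  revert h phi; induction k as [|k IH]; intros h phi Hh.
  - apply le_INR in Hh. cbn. unfold reflected. simpl INR in Hh.
    destruct (Rle_dec (1 - INR h) 0), (Rle_dec 0 (-1 - INR h)); lra.
  - rewrite !sum_over_coin_seqs_S, !sum_over_plus. f_equal.
    + etransitivity; [|etransitivity; [apply (IH (S h) (fun s => phi (1 + s))); lia|]].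
      * apply sum_over_ext; intros w.
        rewrite (stays_above_cons h (S h)); [reflexivity | | rewrite S_INR; lra].
        pose proof (pos_INR h); lra.
      * apply sum_over_ext; intros w. apply reflected_up.
    + destruct h as [|[|h]]; [lia| |].
      * rewrite (sum_over_ext _ (fun _ => 0)), sum_over_0.
        -- symmetry; apply sum_reflected_at_level.
        -- intros w; rewrite stays_above_1_cons_down; reflexivity.
      * etransitivity; [|etransitivity; [apply (IH (S h) (fun s => phi (-1 + s))); lia|]].
        -- apply sum_over_ext; intros w.
           rewrite (stays_above_cons (S (S h)) (S h)); [reflexivity | |];
             rewrite !S_INR; pose proof (pos_INR h); lra.
        -- apply sum_over_ext; intros w. apply reflected_down.
Qed.

(** * Binomial coefficients *)

(* Pascal's recursion, so that [binom n k = 0] for [k > n] (unlike Stdlib's [C]). *)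
Fixpoint binom (n k : nat) : R :=
  match n, k with
  | _, O => 1
  | O, S _ => 0
  | S n', S k' => binom n' k' + binom n' (S k')
  end.

Lemma binom_0_r n : binom n 0 = 1.
Proof. destruct n; reflexivity. Qed.

Lemma binom_gt n k : (n < k)%nat -> binom n k = 0.
Proof.
  revert k; induction n as [|n IH]; intros k Hk; destruct k as [|k]; try lia; simpl; auto.
  rewrite !IH by lia. ring.
Qed.

Lemma binom_pos n k : (k <= n)%nat -> 0 < binom n k.
Proof.
  revert k; induction n as [|n IH]; intros k Hk; destruct k as [|k]; simpl; try lra; try lia.
  destruct (Nat.eq_dec k n) as [->|Hkn].
  - rewrite (binom_gt n (S n)) by lia. rewrite Rplus_0_r. apply IH; lia.
  - pose proof (IH k ltac:(lia)); pose proof (IH (S k) ltac:(lia)); lra.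
Qed.

Lemma binom_ge0 n k : 0 <= binom n k.
Proof.
  destruct (Nat.le_gt_cases k n).
  - left; apply binom_pos; assumption.
  - rewrite binom_gt by assumption; lra.
Qed.

Lemma binom_succ_ratio n k : INR (S k) * binom n (S k) = (INR n - INR k) * binom n k.
Proof.
  revert k; induction n as [|n IH]; intros k.
  - destruct k; simpl; lra.
  - destruct k as [|k]; cbn [binom].
    + rewrite !binom_0_r. pose proof (IH 0%nat) as H0. rewrite binom_0_r in H0.
      rewrite !S_INR in *. simpl INR in *. lra.
    + pose proof (IH k) as Hk. pose proof (IH (S k)) as HSk. rewrite !S_INR in *. lra.
Qed.

Lemma binom_le_central n k : binom n k <= binom n (n / 2).
Proof.
  set (m := (n / 2)%nat).
  assert (Hm : (2 * m <= n <= 2 * m + 1)%nat).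
  { unfold m. pose proof (Nat.div_mod n 2). pose proof (Nat.mod_upper_bound n 2). lia. }
  assert (Hup : forall j, (j < m)%nat -> binom n j <= binom n (S j)).
  { intros j Hj. pose proof (binom_succ_ratio n j) as Hr. pose proof (binom_ge0 n j).
    assert (INR (S j) <= INR n - INR j) by (rewrite <- minus_INR by lia; apply le_INR; lia).
    pose proof (pos_INR j). rewrite S_INR in *. nra. }
  assert (Hdown : forall j, (m <= j)%nat -> binom n (S j) <= binom n j).
  { intros j Hj. pose proof (binom_succ_ratio n j) as Hr. pose proof (binom_ge0 n (S j)).
    destruct (Nat.le_gt_cases j n) as [Hjn|Hjn]; [|rewrite !binom_gt by lia; lra].
    assert (INR n - INR j <= INR (S j)) by (rewrite <- minus_INR by lia; apply le_INR; lia).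
    pose proof (binom_ge0 n j). pose proof (pos_INR j). rewrite S_INR in *.
    apply (Rmult_le_reg_l (INR j + 1)); nra. }
  assert (Hleft : forall d, binom n (m - d) <= binom n m).
  { induction d as [|d IH]; [rewrite Nat.sub_0_r; lra|].
    destruct (Nat.lt_ge_cases d m) as [Hd|Hd].
    - eapply Rle_trans; [|exact IH]. replace (m - d)%nat with (S (m - S d)) by lia.
      apply Hup; lia.
    - replace (m - S d)%nat with (m - d)%nat by lia. exact IH. }
  assert (Hright : forall d, binom n (m + d) <= binom n m).
  { induction d as [|d IH]; [rewrite Nat.add_0_r; lra|].
    eapply Rle_trans; [|exact IH]. rewrite Nat.add_succ_r. apply Hdown; lia. }
  destruct (Nat.le_gt_cases k m).
  - replace k with (m - (m - k))%nat by lia. apply Hleft.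
  - replace k with (m + (k - m))%nat by lia. apply Hright.
Qed.

(* [binom_sum n f] is [2^n] times the expectation of [f] at the end of an [n]-step
   simple random walk. *)
Definition binom_sum (n : nat) (f : R -> R) : R :=
  sum_f_R0 (fun i => binom n i * f (2 * INR i - INR n)) n.

Lemma binom_sum_extend n f :
  binom_sum n f = sum_f_R0 (fun i => binom n i * f (2 * INR i - INR n)) (S n).
Proof. unfold binom_sum. rewrite tech5, (binom_gt n (S n)) by lia. ring. Qed.

Lemma binom_sum_S n f :
  binom_sum (S n) f = binom_sum n (fun s => f (1 + s)) + binom_sum n (fun s => f (-1 + s)).
Proof.
  rewrite (binom_sum_extend n (fun s => f (-1 + s))). unfold binom_sum.
  rewrite decomp_sum, (decomp_sum _ (S n)) by lia. simpl pred. cbn [binom].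
  rewrite (sum_eq _ (fun i => binom n i * f (1 + (2 * INR i - INR n)) +
                              binom n (S i) * f (-1 + (2 * INR (S i) - INR n)))).
  - rewrite sum_plus, S_INR, binom_0_r. simpl INR.
    replace (2 * 0 - (INR n + 1)) with (-1 + (2 * 0 - INR n)) by ring. ring.
  - intros i _. rewrite !S_INR.
    replace (1 + (2 * INR i - INR n)) with (2 * (INR i + 1) - (INR n + 1)) by ring.
    replace (-1 + (2 * (INR i + 1) - INR n)) with (2 * (INR i + 1) - (INR n + 1)) by ring.
    ring.
Qed.

Lemma sum_over_coin_seqs_binom k f :
  sum_over (fun w => f (sum_list w)) (coin_seqs k) = binom_sum k f.
Proof.
  revert f; induction k as [|k IH]; intros f.
  - cbn. replace (2 * 0 - 0) with 0 by ring. ring.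
  - rewrite sum_over_coin_seqs_S, sum_over_plus, binom_sum_S, <- !IH. reflexivity.
Qed.

Lemma binom_sum_flip n f : binom_sum n f = binom_sum n (fun s => f (- s)).
Proof. rewrite <- !sum_over_coin_seqs_binom. apply sum_over_coin_seqs_flip. Qed.

Lemma binom_sum_minus n f g :
  binom_sum n (fun s => f s - g s) = binom_sum n f - binom_sum n g.
Proof. unfold binom_sum. rewrite <- minus_sum. apply sum_eq; intros; ring. Qed.

Lemma binom_sum_ext_int n f g :
  (forall z, f (IZR z) = g (IZR z)) -> binom_sum n f = binom_sum n g.
Proof.
  intros Hfg. unfold binom_sum. apply sum_eq; intros i _.
  replace (2 * INR i - INR n) with (IZR (2 * Z.of_nat i - Z.of_nat n)).
  - rewrite Hfg; reflexivity.
  - rewrite minus_IZR, mult_IZR, <- !INR_IZR_INZ. reflexivity.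
Qed.

Definition step (t : R) (n : nat) : R := sqrt t / sqrt (INR n).

Lemma step_pos t n : 0 < t -> (1 <= n)%nat -> 0 < step t n.
Proof.
  intros ht hn. unfold step. apply Rdiv_lt_0_compat; apply sqrt_lt_R0; [exact ht|].
  apply lt_0_INR; lia.
Qed.

(* [x + c * S_j > 0] iff the integer walk [S_j] stays above [- barrier x c]. *)
Definition barrier (x c : R) : nat := Z.to_nat (1 - up (- (x / c))).

Lemma barrier_bounds x c : 0 < x -> 0 < c -> x <= c * INR (barrier x c) < x + c.
Proof.
  intros hx hc. destruct (archimed (- (x / c))) as [Hup1 Hup2].
  assert (Hxc : 0 < x / c) by (apply Rdiv_lt_0_compat; assumption).
  assert (Hu : (up (- (x / c)) <= 0)%Z) by (apply Z.lt_succ_r, lt_IZR; simpl; lra).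
  unfold barrier. rewrite INR_IZR_INZ, Z2Nat.id, minus_IZR by lia.
  assert (Hx : x = c * (x / c)) by (field; lra).
  set (u := IZR (up (- (x / c)))) in *. set (v := x / c) in *.
  rewrite Hx. split; nra.
Qed.

Lemma barrier_ge1 x c : 0 < x -> 0 < c -> (1 <= barrier x c)%nat.
Proof.
  intros hx hc. destruct (barrier_bounds x c hx hc) as [Hlo _].
  destruct (barrier x c); [simpl in Hlo; lra | lia].
Qed.

Lemma barrier_spec x c z : 0 < x -> 0 < c ->
  (0 < x + c * IZR z <-> 1 - INR (barrier x c) <= IZR z).
Proof.
  intros hx hc. destruct (barrier_bounds x c hx hc) as [Hlo Hhi].
  rewrite INR_IZR_INZ in *. set (h := Z.of_nat (barrier x c)) in *.
  split; intros Hz.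
  - assert (Hzh : (- h < z)%Z) by (apply lt_IZR; rewrite opp_IZR; nra).
    replace (1 - IZR h) with (IZR (1 - h)) by (rewrite minus_IZR; reflexivity).
    apply IZR_le; lia.
  - nra.
Qed.

Lemma in_A_stays_above x t n w : 0 < x -> 0 < t -> (1 <= n)%nat -> In w (coin_seqs n) ->
  in_A x t n w = stays_above (barrier x (step t n)) n w.
Proof.
  intros hx ht hn Hw. unfold in_A, stays_above.
  rewrite <- (map_id (seq 1 n)) at 1. apply forallb_map_ext; intros j.
  destruct (coin_seqs_partial_sum_int n w j Hw) as [z Hz].
  change (walk x t n w j) with (x + step t n * sum_list (firstn j w)). rewrite Hz.
  pose proof (barrier_spec x (step t n) z hx (step_pos t n ht hn)) as Hspec.
  unfold Rltb, Rleb. destruct Rlt_dec, Rle_dec; tauto.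
Qed.

Definition on_pos (phi : R -> R) (y : R) : R := if Rlt_dec 0 y then phi y else 0.

Definition range_ind (a : R) (b : option R) (y : R) : R := if in_range a b y then 1 else 0.

Definition walk_sum (t : R) (n : nat) (y : R) (g : R -> R) : R :=
  binom_sum n (fun s => g (y + step t n * s)).

(* The starting point [x] reflected in the absorbing level [x - step t n * barrier]. *)
Definition mirror (x t : R) (n : nat) : R := x - 2 * step t n * INR (barrier x (step t n)).

Lemma sum_over_A_reflection x t n phi : 0 < x -> 0 < t -> (1 <= n)%nat ->
  sum_over (fun w => if in_A x t n w then phi (walk x t n w n) else 0) (coin_seqs n) =
  walk_sum t n x (on_pos phi) - walk_sum t n (mirror x t n) (on_pos phi).
Proof.
  intros hx ht hn. unfold walk_sum, mirror.
  set (c := step t n). set (h := barrier x c).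
  assert (hc : 0 < c) by (apply step_pos; assumption).
  rewrite (sum_over_ext_in _
    (fun w => if stays_above h n w then (fun s => phi (x + c * s)) (sum_list w) else 0)).
  2:{ intros w Hw. rewrite in_A_stays_above by assumption. unfold walk.
      rewrite firstn_all2 by (rewrite (coin_seqs_length n w Hw); lia). reflexivity. }
  rewrite (reflection_principle n h (fun s => phi (x + c * s)))
    by (apply barrier_ge1; assumption).
  rewrite sum_over_coin_seqs_binom. unfold reflected. rewrite binom_sum_minus. f_equal.
  - apply binom_sum_ext_int; intros z. unfold on_pos.
    pose proof (barrier_spec x c z hx hc) as Hspec. fold h in Hspec.
    destruct Rle_dec, Rlt_dec; tauto.
  - rewrite binom_sum_flip. apply binom_sum_ext_int; intros z. unfold on_pos.
    pose proof (barrier_spec x c (z - 2 * Z.of_nat h) hx hc) as Hspec. fold h in Hspec.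
    rewrite minus_IZR, mult_IZR, <- INR_IZR_INZ in Hspec.
    replace (x - 2 * c * INR h + c * IZR z) with (x + c * (IZR z - 2 * INR h)) by ring.
    replace (-2 * INR h - - IZR z) with (IZR z - 2 * INR h) by ring.
    destruct (Rle_dec (- IZR z) (-1 - INR h)) as [Hz|Hz],
             (Rlt_dec 0 (x + c * (IZR z - 2 * INR h))) as [Hpos|Hpos];
      [reflexivity | | |reflexivity]; exfalso.
    + apply Hpos, Hspec; lra.
    + apply Hspec in Hpos; lra.
Qed.

Lemma Pn_reflection x t n a b : 0 < x -> 0 < t -> (1 <= n)%nat ->
  Pn x t n a b =
  (walk_sum t n x (on_pos (range_ind a b)) - walk_sum t n (mirror x t n) (on_pos (range_ind a b))) /
  (walk_sum t n x (on_pos (fun _ => 1)) - walk_sum t n (mirror x t n) (on_pos (fun _ => 1))).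
Proof.
  intros hx ht hn. unfold Pn, A_n. rewrite !INR_length_filter, !sum_over_filter.
  rewrite <- (sum_over_A_reflection x t n (range_ind a b)),
          <- (sum_over_A_reflection x t n (fun _ => 1)) by assumption.
  reflexivity.
Qed.

(** * A local limit theorem *)

Lemma ln_le_sub_1 y : 0 < y -> ln y <= y - 1.
Proof.
  intros hy. rewrite <- (exp_ln y) at 2 by exact hy. pose proof (exp_ineq1_le (ln y)). lra.
Qed.

Lemma one_sub_inv_le_ln y : 0 < y -> 1 - / y <= ln y.
Proof.
  intros hy. pose proof (ln_le_sub_1 (/ y) (Rinv_0_lt_compat _ hy)) as Hle.
  rewrite ln_Rinv in Hle by exact hy. lra.
Qed.

Lemma Rabs_div_le X Y Z : 0 < Y -> Rabs X <= Z * Y -> Rabs (X / Y) <= Z.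
Proof.
  intros hY hX. rewrite Rabs_div, (Rabs_pos_eq Y) by lra.
  apply Rle_div_l; assumption.
Qed.

Lemma sqrt_INR_sq n : sqrt (INR n) * sqrt (INR n) = INR n.
Proof. apply sqrt_sqrt, pos_INR. Qed.

(* [ln ((1 - v) / (1 + v)) = - 2 v + O(v^2)], the [+ 1]'s costing [O(v / N)]. *)
Lemma ln_ratio_approx N v : 1 <= N -> Rabs v <= 1/2 ->
  Rabs (ln ((N * (1 - v) + 1) / (N * (1 + v) + 1)) + 2 * v) <= 4 * Rabs v * (Rabs v + / N).
Proof.
  intros HN Hv. apply Rabs_le_between in Hv.
  set (A := N * (1 - v) + 1). set (B := N * (1 + v) + 1).
  assert (HA : N / 2 <= A) by (unfold A; nra).
  assert (HB : N / 2 <= B) by (unfold B; nra).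
  assert (HAB : 0 < A / B) by (apply Rdiv_lt_0_compat; lra).
  set (e := 4 * Rabs v * (Rabs v + / N)).
  assert (Hbound : forall X Y, N / 2 <= Y -> Rabs X <= N * Rabs v + 1 ->
                   Rabs (2 * v * X / Y) <= e).
  { intros X Y HY HX. apply Rabs_div_le; [lra|].
    rewrite !Rabs_mult, (Rabs_pos_eq 2) by lra.
    assert (0 < / N) by (apply Rinv_0_lt_compat; lra).
    pose proof (Rabs_pos v). pose proof (Rabs_pos X).
    assert (He : e * (N / 2) = 2 * Rabs v * (N * Rabs v + 1)) by (unfold e; field; lra).
    assert (0 <= e) by (unfold e; nra).
    apply Rle_trans with (2 * Rabs v * (N * Rabs v + 1)); [nra|].
    rewrite <- He. apply Rmult_le_compat_l; lra. }
  assert (Hup : Rabs (A / B - 1 + 2 * v) <= e).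
  { replace (A / B - 1 + 2 * v) with (2 * v * (N * v + 1) / B) by (unfold A, B in *; field; lra).
    apply Hbound; [exact HB|]. eapply Rle_trans; [apply Rabs_triang|].
    rewrite Rabs_mult, (Rabs_pos_eq N), Rabs_R1 by lra. lra. }
  assert (Hlow : Rabs (1 - / (A / B) + 2 * v) <= e).
  { replace (1 - / (A / B) + 2 * v) with (2 * v * (1 - N * v) / A)
      by (unfold A, B in *; field; split; lra).
    apply Hbound; [exact HA|]. unfold Rminus. eapply Rle_trans; [apply Rabs_triang|].
    rewrite Rabs_Ropp, Rabs_mult, (Rabs_pos_eq N), Rabs_R1 by lra. lra. }
  pose proof (ln_le_sub_1 _ HAB). pose proof (one_sub_inv_le_ln _ HAB).
  apply Rabs_le_between in Hup, Hlow. apply Rabs_le_between. lra.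
Qed.

(* [ln (binom n i)] corrected by the Gaussian exponent; it is nearly constant in a window
   [|2i - n| <= K sqrt n]. *)
Definition log_binom_gauss (n i : nat) : R :=
  ln (binom n i) + (2 * INR i - INR n) ^ 2 / (2 * INR n).

Lemma log_binom_gauss_step n i : (1 <= n)%nat -> (i < n)%nat ->
  let v := (2 * INR i - INR n + 1) / INR n in
  Rabs v <= 1/2 ->
  Rabs (log_binom_gauss n (S i) - log_binom_gauss n i) <= 4 * Rabs v * (Rabs v + / INR n).
Proof.
  intros hn hi v hv.
  assert (HN : 1 <= INR n) by (apply (le_INR 1); lia).
  assert (Hni : INR i + 1 <= INR n) by (rewrite <- S_INR; apply le_INR; lia).
  pose proof (pos_INR i).
  assert (Hratio : binom n (S i) = (INR n - INR i) / (INR i + 1) * binom n i).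
  { pose proof (binom_succ_ratio n i) as Hr. rewrite S_INR in Hr.
    apply (Rmult_eq_reg_l (INR i + 1)); [rewrite Hr; field|]; lra. }
  pose proof (ln_ratio_approx (INR n) v HN hv) as Happrox.
  replace ((INR n * (1 - v) + 1) / (INR n * (1 + v) + 1)) with ((INR n - INR i) / (INR i + 1))
    in Happrox by (unfold v; field; lra).
  unfold log_binom_gauss. rewrite Hratio, ln_mult.
  - replace (ln ((INR n - INR i) / (INR i + 1)) + ln (binom n i) +
       (2 * INR (S i) - INR n) ^ 2 / (2 * INR n) -
       (ln (binom n i) + (2 * INR i - INR n) ^ 2 / (2 * INR n)))
      with (ln ((INR n - INR i) / (INR i + 1)) + 2 * v) by (unfold v; rewrite S_INR; field; lra).
    exact Happrox.
  - apply Rdiv_lt_0_compat; lra.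
  - apply binom_pos; lia.
Qed.

Lemma Rabs_telescope_le (f : nat -> R) eps lo d :
  (forall j, (lo <= j < lo + d)%nat -> Rabs (f (S j) - f j) <= eps) ->
  Rabs (f (lo + d)%nat - f lo) <= INR d * eps.
Proof.
  induction d as [|d IH]; intros Hstep.
  - rewrite Nat.add_0_r, Rminus_diag, Rabs_R0. simpl; lra.
  - replace (lo + S d)%nat with (S (lo + d)) by lia. rewrite S_INR.
    replace (f (S (lo + d)) - f lo)
      with ((f (S (lo + d)) - f (lo + d)%nat) + (f (lo + d)%nat - f lo))
      by ring.
    eapply Rle_trans; [apply Rabs_triang|].
    pose proof (Hstep (lo + d)%nat ltac:(lia)). pose proof (IH (fun j hj => Hstep j ltac:(lia))).
    lra.
Qed.

Lemma log_binom_gauss_diff K n lo hi : 0 < K -> (1 <= n)%nat ->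
  K / sqrt (INR n) <= 1/2 -> (lo <= hi <= n)%nat ->
  Rabs (2 * INR lo - INR n) <= K * sqrt (INR n) ->
  Rabs (2 * INR hi - INR n) <= K * sqrt (INR n) ->
  Rabs (log_binom_gauss n hi - log_binom_gauss n lo) <=
  4 * K ^ 3 / sqrt (INR n) + 4 * K ^ 2 / INR n.
Proof.
  intros hK hn hKs Hlh Hlo Hhi.
  set (N := INR n) in *. set (q := sqrt N) in *.
  assert (HN : 1 <= N) by (apply (le_INR 1); lia).
  assert (Hq : 0 < q) by (apply sqrt_lt_R0; lra).
  assert (Hqq : q * q = N) by apply sqrt_INR_sq.
  set (eps := 4 * (K / q) * (K / q + / N)).
  replace hi with (lo + (hi - lo))%nat by lia.
  eapply Rle_trans; [apply (Rabs_telescope_le _ eps)|].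
  - intros j Hj. apply Rabs_le_between in Hlo, Hhi.
    assert (Hj1 : INR lo <= INR j) by (apply le_INR; lia).
    assert (Hj2 : INR j + 1 <= INR hi) by (rewrite <- S_INR; apply le_INR; lia).
    assert (Hv : Rabs ((2 * INR j - N + 1) / N) <= K / q).
    { apply Rabs_div_le; [lra|]. replace (K / q * N) with (K * q) by (rewrite <- Hqq; field; lra).
      apply Rabs_le_between; lra. }
    eapply Rle_trans; [apply log_binom_gauss_step; [lia | lia | fold N; lra]|].
    fold N. unfold eps. pose proof (Rabs_pos ((2 * INR j - N + 1) / N)).
    assert (0 < / N) by (apply Rinv_0_lt_compat; lra).
    apply Rmult_le_compat; nra.
  - rewrite minus_INR by lia. apply Rabs_le_between in Hlo, Hhi.
    assert (Hd : INR hi - INR lo <= K * q) by lra.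
    assert (0 <= eps) by (unfold eps; assert (0 < / N) by (apply Rinv_0_lt_compat; lra);
                          assert (0 < K / q) by (apply Rdiv_lt_0_compat; lra); nra).
    apply Rle_trans with (K * q * eps); [apply Rmult_le_compat_r; lra|].
    right. unfold eps. rewrite <- Hqq. field. lra.
Qed.

Lemma central_index_dist n : Rabs (2 * INR (n / 2) - INR n) <= 1.
Proof.
  pose proof (Nat.div_mod n 2) as Hdm. pose proof (Nat.mod_upper_bound n 2) as Hmod.
  assert (Hm : (2 * (n / 2) <= n <= 2 * (n / 2) + 1)%nat) by lia.
  destruct Hm as [Hm1 Hm2]. apply le_INR in Hm1, Hm2.
  rewrite plus_INR, !mult_INR in *. simpl INR in *. apply Rabs_le_between. lra.
Qed.

Definition lclt_error (K : R) (n : nat) : R := (4 * K ^ 3 + 4 * K ^ 2 + 1) / sqrt (INR n).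

Lemma binom_ratio_gauss K n i : 0 < K -> (1 <= n)%nat ->
  K / sqrt (INR n) <= 1/2 -> 1 <= K * sqrt (INR n) -> (i <= n)%nat ->
  Rabs (2 * INR i - INR n) <= K * sqrt (INR n) ->
  exists th, Rabs th <= lclt_error K n /\
    binom n i / binom n (n / 2) = exp (- (2 * INR i - INR n) ^ 2 / (2 * INR n)) * exp th.
Proof.
  intros hK hn hKs hKq hi Hwin.
  set (m := (n / 2)%nat).
  assert (HN : 1 <= INR n) by (apply (le_INR 1); lia).
  assert (Hq : 1 <= sqrt (INR n)) by (rewrite <- sqrt_1; apply sqrt_le_1_alt; exact HN).
  pose proof (sqrt_INR_sq n) as Hqq. pose proof (central_index_dist n) as Hm1. fold m in Hm1.
  assert (Hm : (m <= n)%nat) by (apply Nat.Div0.div_le_upper_bound; lia).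
  assert (Hdiff : Rabs (log_binom_gauss n i - log_binom_gauss n m) <=
                  4 * K ^ 3 / sqrt (INR n) + 4 * K ^ 2 / INR n).
  { destruct (Nat.le_ge_cases m i).
    - apply log_binom_gauss_diff; try assumption; lia || lra.
    - rewrite Rabs_minus_sym. apply log_binom_gauss_diff; try assumption; lia || lra. }
  exists (log_binom_gauss n i - log_binom_gauss n m + (2 * INR m - INR n) ^ 2 / (2 * INR n)).
  split.
  - eapply Rle_trans; [apply Rabs_triang|].
    rewrite (Rabs_pos_eq ((2 * INR m - INR n) ^ 2 / (2 * INR n)))
      by (apply Rdiv_le_0_compat; [apply pow2_ge_0 | lra]).
    assert ((2 * INR m - INR n) ^ 2 / (2 * INR n) <= 1 / sqrt (INR n)).
    { apply Rabs_le_between in Hm1. apply Rle_div_l; [lra|].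
      assert ((2 * INR m - INR n) ^ 2 <= 1) by nra.
      replace (1 / sqrt (INR n) * (2 * INR n)) with (2 * sqrt (INR n)); [lra|].
      rewrite <- Hqq at 3. field. lra. }
    assert (4 * K ^ 2 / INR n <= 4 * K ^ 2 / sqrt (INR n)).
    { apply Rmult_le_compat_l; [nra|]. apply Rinv_le_contravar; nra. }
    unfold lclt_error. unfold Rdiv in *. lra.
  - rewrite <- exp_plus. unfold log_binom_gauss.
    assert (0 < binom n i) by (apply binom_pos; exact hi).
    assert (0 < binom n m) by (apply binom_pos; lia).
    replace (- (2 * INR i - INR n) ^ 2 / (2 * INR n) +
      (ln (binom n i) + (2 * INR i - INR n) ^ 2 / (2 * INR n) -
       (ln (binom n m) + (2 * INR m - INR n) ^ 2 / (2 * INR n)) +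
       (2 * INR m - INR n) ^ 2 / (2 * INR n))) with (ln (binom n i) - ln (binom n m))
      by (field; lra).
    unfold Rminus. rewrite exp_plus, exp_Ropp, !exp_ln by assumption. reflexivity.
Qed.

(** * Riemann sums on a grid *)

Definition grid_sum (y0 D : R) (n : nat) (F : R -> R) : R :=
  sum_f_R0 (fun i => F (y0 + D * INR i)) n.

Definition clamp (u v z : R) : R := Rmax u (Rmin v z).

Definition ind (u v y : R) : R := if Rle_dec u y then (if Rle_dec y v then 1 else 0) else 0.

Lemma clamp_le u v z1 z2 : u <= v -> z1 <= z2 -> clamp u v z1 <= clamp u v z2.
Proof. intros; unfold clamp, Rmax, Rmin; repeat destruct Rle_dec; lra. Qed.

Lemma clamp_bounds u v z : u <= v -> u <= clamp u v z <= v.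
Proof. intros; unfold clamp, Rmax, Rmin; repeat destruct Rle_dec; lra. Qed.

Lemma clamp_id u v z : u <= z <= v -> clamp u v z = z.
Proof. intros; unfold clamp, Rmax, Rmin; repeat destruct Rle_dec; lra. Qed.

Lemma clamp_below u v z : u <= v -> z <= u -> clamp u v z = u.
Proof. intros; unfold clamp, Rmax, Rmin; repeat destruct Rle_dec; lra. Qed.

Lemma clamp_above u v z : u <= v -> v <= z -> clamp u v z = v.
Proof. intros; unfold clamp, Rmax, Rmin; repeat destruct Rle_dec; lra. Qed.

Lemma clamp_sub_le u v z1 z2 : u <= v -> z1 <= z2 -> clamp u v z2 - clamp u v z1 <= z2 - z1.
Proof. intros; unfold clamp, Rmax, Rmin; repeat destruct Rle_dec; lra. Qed.

Lemma ind_bounds u v y : 0 <= ind u v y <= 1.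
Proof. unfold ind; repeat destruct Rle_dec; lra. Qed.

Lemma ind_in u v y : u <= y <= v -> ind u v y = 1.
Proof. intros; unfold ind; repeat destruct Rle_dec; lra. Qed.

Lemma grid_sum_telescope (Phi : R -> R) y0 D n :
  grid_sum y0 D n (fun y => Phi (y + D / 2) - Phi (y - D / 2)) =
  Phi (y0 + D * INR n + D / 2) - Phi (y0 - D / 2).
Proof.
  unfold grid_sum. induction n as [|n IH].
  - simpl. replace (y0 + D * 0 - D / 2) with (y0 - D / 2) by ring. ring.
  - rewrite tech5, IH, S_INR.
    replace (y0 + D * (INR n + 1) - D / 2) with (y0 + D * INR n + D / 2) by field. ring.
Qed.

Lemma grid_sum_le y0 D n F G : (forall y, F y <= G y) -> grid_sum y0 D n F <= grid_sum y0 D n G.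
Proof. intros HFG; unfold grid_sum; apply sum_Rle; auto. Qed.

Lemma grid_sum_minus y0 D n F G :
  grid_sum y0 D n (fun y => F y - G y) = grid_sum y0 D n F - grid_sum y0 D n G.
Proof. unfold grid_sum. rewrite <- minus_sum. reflexivity. Qed.

Lemma grid_sum_plus y0 D n F G :
  grid_sum y0 D n (fun y => F y + G y) = grid_sum y0 D n F + grid_sum y0 D n G.
Proof. unfold grid_sum. rewrite <- sum_plus. reflexivity. Qed.

Lemma grid_sum_scal y0 D n k F :
  grid_sum y0 D n (fun y => k * F y) = k * grid_sum y0 D n F.
Proof. unfold grid_sum. rewrite scal_sum. apply sum_eq; intros; ring. Qed.

Lemma grid_count_le u v y0 D n : 0 < D -> u <= v ->
  grid_sum y0 D n (fun y => D * ind u v y) <= v - u + D.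
Proof.
  intros hD huv. set (Psi := clamp (u - D / 2) (v + D / 2)).
  apply Rle_trans with (grid_sum y0 D n (fun y => Psi (y + D / 2) - Psi (y - D / 2))).
  - apply grid_sum_le; intros y.
    pose proof (clamp_le (u - D / 2) (v + D / 2) (y - D / 2) (y + D / 2) ltac:(lra) ltac:(lra)).
    unfold ind, Psi. destruct Rle_dec; [destruct Rle_dec|]; [rewrite !clamp_id by lra| |]; lra.
  - rewrite grid_sum_telescope. unfold Psi.
    pose proof (clamp_bounds (u - D / 2) (v + D / 2) (y0 + D * INR n + D / 2) ltac:(lra)).
    pose proof (clamp_bounds (u - D / 2) (v + D / 2) (y0 - D / 2) ltac:(lra)). lra.
Qed.

Lemma grid_weighted_sum_bound y0 D n (a : nat -> R) (g : R -> R) p q M :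
  0 < D -> p <= q -> 0 <= M ->
  (forall y, Rabs (g y) <= 1) -> (forall y, y < p \/ q < y -> g y = 0) ->
  (forall i, (i <= n)%nat -> p <= y0 + D * INR i <= q -> Rabs (a i) <= M) ->
  Rabs (sum_f_R0 (fun i => D * a i * g (y0 + D * INR i)) n) <= M * (q - p + D).
Proof.
  intros hD hpq hM hg hg0 ha.
  eapply Rle_trans; [apply Rabs_triang_gen|].
  apply Rle_trans with (M * grid_sum y0 D n (fun y => D * ind p q y));
    [|apply Rmult_le_compat_l; [exact hM | apply grid_count_le; assumption]].
  unfold grid_sum. rewrite scal_sum. apply sum_Rle; intros i Hi.
  set (y := y0 + D * INR i).
  destruct (Rle_dec p y) as [Hp|Hp]; [destruct (Rle_dec y q) as [Hq|Hq]|].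
  - rewrite ind_in by lra. rewrite !Rabs_mult, (Rabs_pos_eq D) by lra.
    specialize (ha i Hi (conj Hp Hq)). specialize (hg y).
    assert (Rabs (a i) * Rabs (g y) <= M * 1)
      by (apply Rmult_le_compat; auto; apply Rabs_pos).
    rewrite Rmult_assoc. nra.
  - rewrite hg0, Rmult_0_r, Rabs_R0 by lra.
    apply Rmult_le_pos; [apply Rmult_le_pos; [lra | apply ind_bounds] | exact hM].
  - rewrite hg0, Rmult_0_r, Rabs_R0 by lra.
    apply Rmult_le_pos; [apply Rmult_le_pos; [lra | apply ind_bounds] | exact hM].
Qed.

(* [q = None] stands for [+oo]; the values of [g] at [p] and [q] are unconstrained. *)
Definition plateau (g : R -> R) (p : R) (q : option R) : Prop :=
  (forall y, 0 <= g y <= 1) /\ (forall y, y < p -> g y = 0) /\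
  (forall y, p < y -> match q with
                      | Some q' => (y < q' -> g y = 1) /\ (q' < y -> g y = 0)
                      | None => g y = 1
                      end).

Lemma RInt_Chasles_sub (f : R -> R) a b c : (forall a b, ex_RInt f a b) ->
  RInt f a c - RInt f a b = RInt f b c.
Proof. intros hex. rewrite <- (RInt_Chasles f a b c) by apply hex. unfold plus; simpl. ring. Qed.

Lemma Rabs_sub_le a b : Rabs (a - b) <= Rabs a + Rabs b.
Proof. unfold Rminus. rewrite <- (Rabs_Ropp b). apply Rabs_triang. Qed.

Lemma RInt_const_sub_le f a b c M : a <= b -> ex_RInt f a b ->
  (forall z, a <= z <= b -> Rabs (c - f z) <= M) ->
  Rabs ((b - a) * c - RInt f a b) <= (b - a) * M.
Proof.
  intros hab hex hM.
  replace ((b - a) * c) with (RInt (fun _ => c) a b) by (rewrite RInt_const; reflexivity).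
  replace (RInt (fun _ => c) a b - RInt f a b) with (RInt (fun z => c - f z) a b)
    by (apply (RInt_minus (fun _ => c) f); [apply ex_RInt_const | exact hex]).
  apply abs_RInt_le_const; [exact hab | | exact hM].
  apply (ex_RInt_minus (fun _ => c) f); [apply ex_RInt_const | exact hex].
Qed.

Section RiemannSum.

Variables (f g : R -> R) (p q L D : R).
Hypotheses (hD : 0 < D) (hpq : p < q) (hL : 0 <= L)
  (hex : forall a b, ex_RInt f a b) (hf : forall y, Rabs (f y) <= 1)
  (hlip : forall y z, p <= y <= q -> p <= z <= q -> Rabs (f y - f z) <= L * Rabs (y - z))
  (hg : plateau g p (Some q)).

Let cell_error (y : R) : R :=
  Rabs (D * f y * g y - RInt f (clamp p q (y - D / 2)) (clamp p q (y + D / 2))).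

Lemma cell_error_le y : cell_error y <= 2 * D.
Proof.
  destruct hg as [hg01 _]. unfold cell_error.
  eapply Rle_trans; [apply Rabs_sub_le|].
  assert (Rabs (D * f y * g y) <= D).
  { rewrite !Rabs_mult, (Rabs_pos_eq D), (Rabs_pos_eq (g y)) by (apply hg01 || lra).
    assert (Rabs (f y) * g y <= 1 * 1)
      by (apply Rmult_le_compat; [apply Rabs_pos | apply hg01 | apply hf | apply hg01]).
    rewrite Rmult_assoc. nra. }
  assert (Rabs (RInt f (clamp p q (y - D / 2)) (clamp p q (y + D / 2))) <= D).
  { pose proof (clamp_le p q (y - D / 2) (y + D / 2) ltac:(lra) ltac:(lra)) as Hle.
    pose proof (clamp_sub_le p q (y - D / 2) (y + D / 2) ltac:(lra) ltac:(lra)).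
    eapply Rle_trans;
      [apply abs_RInt_le_const with (M := 1); [exact Hle | apply hex | intros z _; apply hf]|].
    lra. }
  lra.
Qed.

Lemma cell_error_interior y : p + D / 2 < y < q - D / 2 -> cell_error y <= L * D / 2 * D.
Proof.
  intros Hy. destruct hg as [_ [_ hg_hi]]. destruct (hg_hi y) as [Hg1 _]; [lra|].
  unfold cell_error. rewrite !clamp_id by lra. rewrite Hg1, Rmult_1_r by lra.
  replace (D * f y) with ((y + D / 2 - (y - D / 2)) * f y) by field.
  eapply Rle_trans; [apply (RInt_const_sub_le f _ _ (f y) (L * (D / 2))); [lra | apply hex |]|].
  - intros z Hz. eapply Rle_trans; [apply hlip; lra|].
    apply Rmult_le_compat_l; [exact hL|]. apply Rabs_le_between'. lra.
  - right. field.
Qed.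

Lemma riemann_cell_error y :
  cell_error y <= L * D / 2 * (D * ind p q y) +
  2 * (D * ind (p - D / 2) (p + D / 2) y) + 2 * (D * ind (q - D / 2) (q + D / 2) y).
Proof.
  destruct hg as [_ [hg_lo hg_hi]].
  pose proof (ind_bounds p q y). pose proof (ind_bounds (p - D / 2) (p + D / 2) y).
  pose proof (ind_bounds (q - D / 2) (q + D / 2) y).
  assert (0 <= L * D / 2 * (D * ind p q y))
    by (apply Rmult_le_pos; [apply Rmult_le_pos; [apply Rmult_le_pos|] | apply Rmult_le_pos]; lra).
  assert (0 <= D * ind (p - D / 2) (p + D / 2) y) by (apply Rmult_le_pos; lra).
  assert (0 <= D * ind (q - D / 2) (q + D / 2) y) by (apply Rmult_le_pos; lra).
  pose proof (cell_error_le y).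
  destruct (Rle_dec (Rabs (y - p)) (D / 2)) as [Hp|Hp].
  { apply Rabs_le_between' in Hp. rewrite (ind_in (p - D / 2)) by lra. lra. }
  destruct (Rle_dec (Rabs (y - q)) (D / 2)) as [Hq|Hq].
  { apply Rabs_le_between' in Hq. rewrite (ind_in (q - D / 2)) by lra. lra. }
  assert (Hp' : y < p - D / 2 \/ p + D / 2 < y)
    by (apply Rnot_le_lt in Hp; unfold Rabs in Hp; destruct Rcase_abs in Hp; lra).
  assert (Hq' : y < q - D / 2 \/ q + D / 2 < y)
    by (apply Rnot_le_lt in Hq; unfold Rabs in Hq; destruct Rcase_abs in Hq; lra).
  destruct Hp' as [Hleft|Hp']; [|destruct Hq' as [Hinner|Hright]].
  - unfold cell_error. rewrite hg_lo, !(clamp_below p q), RInt_point, Rmult_0_r by lra.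
    unfold zero; simpl. rewrite Rminus_0_r, Rabs_R0. lra.
  - rewrite (ind_in p q) by lra. pose proof (cell_error_interior y ltac:(lra)). lra.
  - destruct (hg_hi y) as [_ Hg0]; [lra|]. unfold cell_error.
    rewrite Hg0, !(clamp_above p q), RInt_point, Rmult_0_r by lra.
    unfold zero; simpl. rewrite Rminus_0_r, Rabs_R0. lra.
Qed.


Lemma riemann_grid_error y0 n :
  y0 - D / 2 <= p -> q <= y0 + D * INR n + D / 2 ->
  Rabs (grid_sum y0 D n (fun y => D * f y * g y) - RInt f p q) <=
  L * D / 2 * (q - p + D) + 8 * D.
Proof.
  intros hlo hhi.
  set (Phi := fun z => RInt f p (clamp p q z)).
  assert (Htel : grid_sum y0 D n (fun y => Phi (y + D / 2) - Phi (y - D / 2)) = RInt f p q).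
  { rewrite grid_sum_telescope. unfold Phi.
    rewrite (clamp_above p q), (clamp_below p q (y0 - D / 2)), RInt_point by lra.
    unfold zero; simpl. ring. }
  rewrite <- Htel, <- grid_sum_minus.
  apply Rle_trans with (grid_sum y0 D n (fun y => L * D / 2 * (D * ind p q y) +
    2 * (D * ind (p - D / 2) (p + D / 2) y) + 2 * (D * ind (q - D / 2) (q + D / 2) y))).
  { unfold grid_sum. eapply Rle_trans; [apply Rabs_triang_gen|].
    apply sum_Rle; intros i _. unfold Phi.
    rewrite RInt_Chasles_sub by apply hex. apply riemann_cell_error. }
  rewrite !grid_sum_plus, (grid_sum_scal _ _ _ (L * D / 2)), !(grid_sum_scal _ _ _ 2).
  pose proof (grid_count_le p q y0 D n hD ltac:(lra)).
  pose proof (grid_count_le (p - D / 2) (p + D / 2) y0 D n hD ltac:(lra)).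
  pose proof (grid_count_le (q - D / 2) (q + D / 2) y0 D n hD ltac:(lra)).
  assert (L * D / 2 * grid_sum y0 D n (fun y => D * ind p q y) <= L * D / 2 * (q - p + D))
    by (apply Rmult_le_compat_l; [apply Rmult_le_pos; [apply Rmult_le_pos|]|]; lra).
  lra.
Qed.

End RiemannSum.

(** * The Gaussian kernel *)

Lemma exp_le_1 u : u <= 0 -> exp u <= 1.
Proof.
  intros [Hu | ->]; [left; rewrite <- exp_0; apply exp_increasing; exact Hu | rewrite exp_0; lra].
Qed.

Lemma exp_neg_sub_abs_le A B : 0 <= A -> 0 <= B -> Rabs (exp (- A) - exp (- B)) <= Rabs (A - B).
Proof.
  assert (Hmono : forall A B, 0 <= A <= B -> 0 <= exp (- A) - exp (- B) <= B - A).
  { intros a b [Ha Hab]. replace (exp (- b)) with (exp (- a) * exp (- (b - a)))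
      by (rewrite <- exp_plus; f_equal; ring).
    pose proof (exp_ineq1_le (- (b - a))). pose proof (exp_le_1 (- (b - a)) ltac:(lra)).
    pose proof (exp_le_1 (- a) ltac:(lra)). pose proof (exp_pos (- a)). nra. }
  intros HA HB. destruct (Rle_dec A B) as [HAB|HAB].
  - destruct (Hmono A B ltac:(lra)). rewrite Rabs_pos_eq, Rabs_minus_sym, Rabs_pos_eq; lra.
  - destruct (Hmono B A ltac:(lra)). rewrite Rabs_minus_sym, Rabs_pos_eq, Rabs_pos_eq; lra.
Qed.

Lemma exp_sub_1_abs_le th : Rabs th <= 1 -> Rabs (exp th - 1) <= 3 * Rabs th.
Proof.
  intros Hth. apply Rabs_le_between in Hth. pose proof (exp_ineq1_le th).
  destruct (Rle_dec 0 th) as [Hpos|Hneg].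
  - assert (exp th * exp (- th) = 1) by (rewrite <- exp_plus, Rplus_opp_r; apply exp_0).
    pose proof (exp_ineq1_le (- th)).
    assert (exp th <= 3).
    { apply Rle_trans with (exp 1); [|apply exp_le_3].
      destruct (Req_dec th 1) as [->|]; [lra | left; apply exp_increasing; lra]. }
    rewrite !Rabs_pos_eq by lra. nra.
  - assert (exp th <= 1) by (apply exp_le_1; lra).
    rewrite Rabs_left1, Rabs_left by lra. lra.
Qed.

Definition gauss (t y0 y : R) : R := exp (- (y - y0) ^ 2 / (2 * t)).

Section Gauss.

Variable t : R.
Hypothesis ht : 0 < t.

Lemma gauss_pos y0 y : 0 < gauss t y0 y.
Proof. apply exp_pos. Qed.

Lemma gauss_le_1 y0 y : gauss t y0 y <= 1.
Proof.
  apply exp_le_1. unfold Rdiv. pose proof (pow2_ge_0 (y - y0)).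
  assert (0 < / (2 * t)) by (apply Rinv_0_lt_compat; lra). nra.
Qed.

Lemma gauss_abs_le_1 y0 y : Rabs (gauss t y0 y) <= 1.
Proof. rewrite Rabs_pos_eq by (left; apply gauss_pos). apply gauss_le_1. Qed.

Lemma gauss_continuous y0 y : continuous (gauss t y0) y.
Proof.
  apply (ex_derive_continuous (K := R_AbsRing) (V := R_NormedModule)).
  unfold gauss. auto_derive. exact I.
Qed.

Lemma ex_RInt_gauss y0 a b : ex_RInt (gauss t y0) a b.
Proof.
  apply (ex_RInt_continuous (V := R_CompleteNormedModule)). intros; apply gauss_continuous.
Qed.

Lemma gauss_sub_abs_le a b y z M : Rabs (y - a) <= M -> Rabs (z - b) <= M ->
  Rabs (gauss t a y - gauss t b z) <= Rabs ((y - a) - (z - b)) * (M / t).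
Proof.
  intros Hy Hz. unfold gauss.
  replace (- (y - a) ^ 2 / (2 * t)) with (- ((y - a) ^ 2 / (2 * t))) by (field; lra).
  replace (- (z - b) ^ 2 / (2 * t)) with (- ((z - b) ^ 2 / (2 * t))) by (field; lra).
  eapply Rle_trans; [apply exp_neg_sub_abs_le; apply Rdiv_le_0_compat; (apply pow2_ge_0 || lra)|].
  replace ((y - a) ^ 2 / (2 * t) - (z - b) ^ 2 / (2 * t)) with
    (((y - a) - (z - b)) * (((y - a) + (z - b)) / (2 * t))) by (field; lra).
  rewrite Rabs_mult. apply Rmult_le_compat_l; [apply Rabs_pos|].
  apply Rabs_div_le; [lra|].
  eapply Rle_trans; [apply Rabs_triang|]. replace (M / t * (2 * t)) with (2 * M) by (field; lra).
  lra.
Qed.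

(* Bound the tail by the integral of [(y - y0) / (Q - y0) * gauss], which has the
   explicit primitive [- t / (Q - y0) * gauss]. *)
Lemma RInt_gauss_tail_le y0 Q B : y0 < Q -> Q <= B -> RInt (gauss t y0) Q B <= t / (Q - y0).
Proof.
  intros HQ HB.
  set (F := fun y => - t * gauss t y0 y).
  assert (Hderiv : forall y, is_derive F y ((y - y0) * gauss t y0 y)).
  { intros y. unfold F, gauss. auto_derive; [exact I|].
    replace (exp (- ((y + - y0) * ((y + - y0) * 1)) * / (2 * t)))
      with (exp (- (y - y0) ^ 2 / (2 * t))) by (f_equal; field; lra).
    field. lra. }
  assert (Hcont : forall y, continuous (fun y => (y - y0) * gauss t y0 y) y).
  { intros y. apply (ex_derive_continuous (K := R_AbsRing) (V := R_NormedModule)).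
    unfold gauss. auto_derive. exact I. }
  assert (HI : RInt (fun y => (y - y0) * gauss t y0 y) Q B = F B - F Q).
  { apply is_RInt_unique, (is_RInt_derive F); intros; [apply Hderiv | apply Hcont]. }
  assert (Hex : ex_RInt (fun y => (y - y0) * gauss t y0 y) Q B)
    by (apply (ex_RInt_continuous (V := R_CompleteNormedModule)); intros; apply Hcont).
  apply Rle_trans with (RInt (fun y => / (Q - y0) * ((y - y0) * gauss t y0 y)) Q B).
  - apply RInt_le;
      [exact HB | apply ex_RInt_gauss |
       apply (ex_RInt_scal (fun y => (y - y0) * gauss t y0 y)), Hex |].
    intros y Hy. pose proof (gauss_pos y0 y).
    replace (gauss t y0 y) with (/ (Q - y0) * ((Q - y0) * gauss t y0 y)) at 1 by (field; lra).
    apply Rmult_le_compat_l; [left; apply Rinv_0_lt_compat; lra | nra].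
  - replace (RInt (fun y => / (Q - y0) * ((y - y0) * gauss t y0 y)) Q B)
      with (/ (Q - y0) * RInt (fun y => (y - y0) * gauss t y0 y) Q B)
      by (symmetry; exact (RInt_scal (fun y => (y - y0) * gauss t y0 y) Q B _ Hex)).
    rewrite HI. unfold F.
    pose proof (gauss_pos y0 B). pose proof (gauss_le_1 y0 Q).
    unfold Rdiv. rewrite Rmult_comm. apply Rmult_le_compat_r; [left; apply Rinv_0_lt_compat|]; nra.
Qed.

Lemma RInt_gauss_le_mono y0 p B1 B2 : B1 <= B2 -> RInt (gauss t y0) p B1 <= RInt (gauss t y0) p B2.
Proof.
  intros HB. rewrite <- (Rplus_0_r (RInt (gauss t y0) p B1)).
  replace (RInt (gauss t y0) p B2) with (RInt (gauss t y0) p B1 + RInt (gauss t y0) B1 B2)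
    by (rewrite <- (RInt_Chasles_sub _ p B1 B2) by apply ex_RInt_gauss; ring).
  apply Rplus_le_compat_l, RInt_ge_0; [exact HB | apply ex_RInt_gauss |].
  intros; left; apply gauss_pos.
Qed.

Lemma gauss_improper y0 p : exists L,
  (forall eps, 0 < eps -> exists M, forall B, B >= M -> Rabs (RInt (gauss t y0) p B - L) < eps) /\
  (forall Q, Rmax p y0 < Q -> 0 <= L - RInt (gauss t y0) p Q <= t / (Q - y0)).
Proof.
  set (F := fun B => RInt (gauss t y0) p B).
  assert (Hub : forall Q B, Rmax p y0 < Q -> F B <= F Q + t / (Q - y0)).
  { intros Q B HQ. assert (y0 < Q) by (pose proof (Rmax_r p y0); lra).
    assert (0 < t / (Q - y0)) by (apply Rdiv_lt_0_compat; lra).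
    destruct (Rle_dec B Q) as [HBQ|HBQ].
    - pose proof (RInt_gauss_le_mono y0 p B Q HBQ). unfold F. lra.
    - unfold F. pose proof (RInt_Chasles_sub _ p Q B (ex_RInt_gauss y0)).
      pose proof (RInt_gauss_tail_le y0 Q B ltac:(lra) ltac:(lra)). lra. }
  destruct (completeness (fun v => exists B, v = F B)) as [L [HL1 HL2]].
  - exists (F (Rmax p y0 + 1) + t / (Rmax p y0 + 1 - y0)). intros v [B ->]. apply Hub. lra.
  - exists (F 0), 0. reflexivity.
  - exists L. split.
    + intros eps Heps.
      assert (HB0 : exists B0, L - eps < F B0).
      { apply Classical_Prop.NNPP. intros Hn.
        assert (L <= L - eps); [|lra].
        apply HL2. intros v [B ->]. apply Rnot_lt_le. intros HB. apply Hn. exists B. exact HB. }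
      destruct HB0 as [B0 HB0]. exists B0. intros B HB.
      pose proof (RInt_gauss_le_mono y0 p B0 B ltac:(lra)).
      assert (F B <= L) by (apply HL1; exists B; reflexivity).
      unfold F in *. rewrite Rabs_left1; lra.
    + intros Q HQ. fold (F Q). split.
      * assert (F Q <= L) by (apply HL1; exists Q; reflexivity). lra.
      * assert (L <= F Q + t / (Q - y0)); [|lra].
        apply HL2. intros v [B ->]. apply Hub. exact HQ.
Qed.

End Gauss.

Lemma is_lim_seq_scal_0 (a : R) (u : nat -> R) : is_lim_seq u 0 -> is_lim_seq (fun n => a * u n) 0.
Proof.
  intros Hu. replace (Finite 0) with (Rbar_mult a 0) by (simpl; f_equal; ring).
  apply is_lim_seq_scal_l, Hu.
Qed.

Lemma sqrt_INR_lim : is_lim_seq (fun n => sqrt (INR n)) p_infty.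
Proof. apply (filterlim_comp _ _ _ INR sqrt _ _ _ is_lim_seq_INR filterlim_sqrt_p). Qed.

Lemma inv_sqrt_INR_lim : is_lim_seq (fun n => / sqrt (INR n)) 0.
Proof. apply (is_lim_seq_inv _ p_infty); [exact sqrt_INR_lim | discriminate]. Qed.

Lemma lclt_error_lim K : is_lim_seq (lclt_error K) 0.
Proof. apply is_lim_seq_scal_0, inv_sqrt_INR_lim. Qed.

Lemma step_lim t : is_lim_seq (step t) 0.
Proof. apply is_lim_seq_scal_0, inv_sqrt_INR_lim. Qed.

Lemma eventually_lt_lim (u : nat -> R) (l e : R) :
  is_lim_seq u l -> l < e -> eventually (fun n => u n < e).
Proof.
  intros Hu Hle. apply is_lim_seq_spec in Hu.
  change (forall eps : posreal, eventually (fun n => Rabs (u n - l) < eps)) in Hu.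
  assert (He : 0 < e - l) by lra.
  destruct (Hu (mkposreal _ He)) as [N HN]. exists N. intros n Hn.
  specialize (HN n Hn). simpl in HN. apply Rabs_lt_between' in HN. lra.
Qed.

Lemma eventually_gt_lim (u : nat -> R) M : is_lim_seq u p_infty -> eventually (fun n => M < u n).
Proof. intros Hu. apply is_lim_seq_spec in Hu. apply Hu. Qed.

Lemma is_lim_seq_of_abs_sub_le (u err : nat -> R) (l : R) :
  is_lim_seq err 0 -> eventually (fun n => Rabs (u n - l) <= err n) -> is_lim_seq u l.
Proof.
  intros Herr Hev.
  apply (is_lim_seq_le_le_loc (fun n => l - err n) u (fun n => l + err n)).
  - eapply filter_imp; [|exact Hev]. intros n Hn. apply Rabs_le_between' in Hn. lra.
  - replace (Finite l) with (Rbar_minus l 0) by (simpl; f_equal; ring).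
    apply is_lim_seq_minus'; [apply is_lim_seq_const | exact Herr].
  - replace (Finite l) with (Rbar_plus l 0) by (simpl; f_equal; ring).
    apply is_lim_seq_plus'; [apply is_lim_seq_const | exact Herr].
Qed.

Lemma is_lim_seq_approx (u : nat -> R) (L : R) :
  (forall eps, 0 < eps -> exists (v : nat -> R) (l : R),
     is_lim_seq v l /\ Rabs (l - L) <= eps /\ eventually (fun n => Rabs (u n - v n) <= eps)) ->
  is_lim_seq u L.
Proof.
  intros Happrox. apply is_lim_seq_spec. intros eps.
  assert (Hq : 0 < eps / 4) by (destruct eps; simpl; lra).
  destruct (Happrox _ Hq) as [v [l [Hv [Hl Hev]]]].
  apply is_lim_seq_spec in Hv.
  change (forall e : posreal, eventually (fun n => Rabs (v n - l) < e)) in Hv.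
  generalize (filter_and _ _ Hev (Hv (mkposreal _ Hq))). apply filter_imp.
  intros n [H1 H2]. simpl in H2.
  replace (u n - L) with ((u n - v n) + (v n - l) + (l - L)) by ring.
  eapply Rle_lt_trans; [apply Rabs_triang|].
  eapply Rle_lt_trans; [apply Rplus_le_compat_r, Rabs_triang|].
  destruct eps; simpl in *; lra.
Qed.

Lemma is_lim_seq_abs_sub (y : nat -> R) (y0 : R) :
  is_lim_seq y y0 -> is_lim_seq (fun n => Rabs (y n - y0)) 0.
Proof.
  intros Hy. assert (Hsub : is_lim_seq (fun n => y n - y0) 0).
  { replace (Finite 0) with (Finite (y0 - y0)) by (f_equal; ring).
    apply is_lim_seq_minus'; [exact Hy | apply is_lim_seq_const]. }
  replace (Finite 0) with (Rbar_abs 0) by (simpl; rewrite Rabs_R0; reflexivity).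
  apply is_lim_seq_abs, Hsub.
Qed.

Lemma step_sq t n : 0 < t -> (1 <= n)%nat -> step t n * step t n = t / INR n.
Proof.
  intros ht hn. assert (0 < INR n) by (apply lt_0_INR; lia).
  unfold step. rewrite <- (sqrt_sqrt t) at 3 by lra. rewrite <- (sqrt_INR_sq n) at 3.
  field. apply Rgt_not_eq, sqrt_lt_R0. assumption.
Qed.

Lemma step_mul_INR t n : (1 <= n)%nat -> step t n * INR n = sqrt t * sqrt (INR n).
Proof.
  intros hn. assert (0 < sqrt (INR n)) by (apply sqrt_lt_R0, lt_0_INR; lia).
  unfold step. rewrite <- (sqrt_INR_sq n) at 2. field. lra.
Qed.

(* Since [binom n i / binom n (n/2)] is close to [gauss] at the grid point
   [y + step t n * (2 i - n)], and these points are [2 * step t n] apart, this is a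
   Riemann sum for the integral of [g] against [gauss t y]. *)
Definition gauss_sum (t : R) (n : nat) (y : R) (g : R -> R) : R :=
  2 * step t n / binom n (n / 2) * walk_sum t n y g.

Lemma gauss_sum_grid t n y g :
  gauss_sum t n y g =
  sum_f_R0 (fun i => 2 * step t n * (binom n i / binom n (n / 2)) *
                     g ((y - step t n * INR n) + 2 * step t n * INR i)) n.
Proof.
  unfold gauss_sum, walk_sum, binom_sum. rewrite scal_sum. apply sum_eq; intros i _.
  replace (y + step t n * (2 * INR i - INR n)) with (y - step t n * INR n + 2 * step t n * INR i)
    by ring.
  unfold Rdiv; ring.
Qed.

Lemma gauss_sum_plus t n y g1 g2 :
  gauss_sum t n y (fun z => g1 z + g2 z) = gauss_sum t n y g1 + gauss_sum t n y g2.
Proof. rewrite !gauss_sum_grid, <- sum_plus. apply sum_eq; intros; ring. Qed.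

Lemma gauss_sum_ext t n y g1 g2 :
  (forall z, g1 z = g2 z) -> gauss_sum t n y g1 = gauss_sum t n y g2.
Proof. intros Hg. rewrite !gauss_sum_grid. apply sum_eq; intros; rewrite Hg; reflexivity. Qed.

Lemma binom_ratio_sub_gauss t n K y i : 0 < t -> (1 <= n)%nat -> 0 < K ->
  K / sqrt (INR n) <= 1/2 -> 1 <= K * sqrt (INR n) -> lclt_error K n <= 1 -> (i <= n)%nat ->
  Rabs (step t n * (2 * INR i - INR n)) <= K * sqrt t ->
  Rabs (binom n i / binom n (n / 2) - gauss t y (y + step t n * (2 * INR i - INR n))) <=
  3 * lclt_error K n.
Proof.
  intros ht hn hK hKs hKq heta hi Hwin.
  assert (Hc : 0 < step t n) by (apply step_pos; assumption).
  assert (Hs : 0 < sqrt (INR n)) by (apply sqrt_lt_R0, lt_0_INR; lia).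
  assert (Hst : 0 < sqrt t) by (apply sqrt_lt_R0; exact ht).
  assert (Hi : Rabs (2 * INR i - INR n) <= K * sqrt (INR n)).
  { rewrite Rabs_mult, (Rabs_pos_eq (step t n)) in Hwin by lra. unfold step in Hwin.
    apply (Rmult_le_reg_l (sqrt t / sqrt (INR n))); [apply Rdiv_lt_0_compat; lra|].
    replace (sqrt t / sqrt (INR n) * (K * sqrt (INR n))) with (K * sqrt t) by (field; lra).
    exact Hwin. }
  destruct (binom_ratio_gauss K n i hK hn hKs hKq hi Hi) as [th [Hth Hrho]]. rewrite Hrho.
  replace (gauss t y (y + step t n * (2 * INR i - INR n)))
    with (exp (- (2 * INR i - INR n) ^ 2 / (2 * INR n))).
  2:{ unfold gauss. f_equal.
      replace ((y + step t n * (2 * INR i - INR n) - y) ^ 2)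
        with (step t n * step t n * (2 * INR i - INR n) ^ 2) by ring.
      rewrite step_sq by assumption. assert (0 < INR n) by (apply lt_0_INR; lia).
      field. lra. }
  set (ex := exp (- (2 * INR i - INR n) ^ 2 / (2 * INR n))).
  replace (ex * exp th - ex) with (ex * (exp th - 1)) by ring.
  rewrite Rabs_mult, Rabs_pos_eq by (left; apply exp_pos).
  assert (ex <= 1).
  { apply exp_le_1. assert (0 < INR n) by (apply lt_0_INR; lia).
    apply Rmult_le_0_r; [pose proof (pow2_ge_0 (2 * INR i - INR n)); lra|].
    left; apply Rinv_0_lt_compat; lra. }
  pose proof (exp_sub_1_abs_le th ltac:(lra)). pose proof (Rabs_pos (exp th - 1)).
  assert (0 <= ex) by (left; apply exp_pos). nra.
Qed.

Lemma plateau_abs_le_1 g p q z : plateau g p q -> Rabs (g z) <= 1.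
Proof. intros [hg01 _]. specialize (hg01 z). rewrite Rabs_pos_eq; lra. Qed.

Lemma plateau_outside g p q z : p < q -> plateau g p (Some q) -> z < p \/ q < z -> g z = 0.
Proof.
  intros hpq [_ [hg_lo hg_hi]] [Hz|Hz]; [apply hg_lo, Hz|].
  destruct (hg_hi z) as [_ Hg0]; [lra | apply Hg0, Hz].
Qed.

Lemma lclt_error_ge0 K n : 0 < K -> (1 <= n)%nat -> 0 <= lclt_error K n.
Proof.
  intros HK hn. unfold lclt_error. apply Rdiv_le_0_compat; [|apply sqrt_lt_R0, lt_0_INR; lia].
  pose proof (pow_lt K 3 HK). pose proof (pow_lt K 2 HK). lra.
Qed.

Section GaussSumError.

Variables (t : R) (g : R -> R) (p q y0 y : R) (n : nat).

Let M := Rmax (Rabs (p - y0)) (Rabs (q - y0)) + 1.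
Let K := M / sqrt t.
Let c := step t n.
Let y1 := y - c * INR n.

Hypotheses (ht : 0 < t) (hpq : p < q) (hg : plateau g p (Some q)) (hn : (1 <= n)%nat)
  (Hy : Rabs (y - y0) <= 1) (hKs : K / sqrt (INR n) <= 1/2) (hKq : 1 <= K * sqrt (INR n))
  (heta : lclt_error K n <= 1) (hc : 2 * c <= 1)
  (Hlo : y - c * INR n - c <= p) (Hhi : q <= y + c * INR n + c).

Lemma M_ge_1 : 1 <= M.
Proof.
  unfold M. pose proof (Rmax_l (Rabs (p - y0)) (Rabs (q - y0))). pose proof (Rabs_pos (p - y0)).
  lra.
Qed.

Lemma window_dist z : p <= z <= q -> Rabs (z - y) <= M /\ Rabs (z - y0) <= M.
Proof.
  intros Hz. assert (Rabs (z - y0) <= M - 1).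
  { unfold M, Rmax. destruct Rle_dec; unfold Rabs in *; repeat destruct Rcase_abs; lra. }
  split; [|lra]. replace (z - y) with ((z - y0) + (y0 - y)) by ring.
  eapply Rle_trans; [apply Rabs_triang|]. rewrite Rabs_minus_sym in Hy. lra.
Qed.

Lemma gauss_sum_lclt_term :
  Rabs (sum_f_R0 (fun i => 2 * c * (binom n i / binom n (n / 2) - gauss t y (y1 + 2 * c * INR i)) *
                           g (y1 + 2 * c * INR i)) n) <=
  3 * lclt_error K n * (q - p + 2 * c).
Proof.
  assert (Hc : 0 < c) by (apply step_pos; assumption).
  assert (HK : 0 < K) by (apply Rdiv_lt_0_compat; [pose proof M_ge_1 | apply sqrt_lt_R0]; lra).
  pose proof (lclt_error_ge0 K n HK hn).
  apply grid_weighted_sum_bound; try lra;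
    [intros; apply (plateau_abs_le_1 g p (Some q)), hg |
     intros; apply (plateau_outside g p q); assumption |].
  intros i Hi Hz.
  replace (y1 + 2 * c * INR i) with (y + step t n * (2 * INR i - INR n)) in *
    by (unfold y1, c; ring).
  apply binom_ratio_sub_gauss; try assumption.
  destruct (window_dist _ Hz) as [Hz1 _].
  replace (y + step t n * (2 * INR i - INR n) - y) with (step t n * (2 * INR i - INR n)) in Hz1
    by ring.
  unfold K. replace (M / sqrt t * sqrt t) with M by (field; apply Rgt_not_eq, sqrt_lt_R0, ht).
  exact Hz1.
Qed.

Lemma gauss_sum_shift_term :
  Rabs (sum_f_R0 (fun i => 2 * c * (gauss t y (y1 + 2 * c * INR i) -
                                     gauss t y0 (y1 + 2 * c * INR i)) *
                           g (y1 + 2 * c * INR i)) n) <=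
  Rabs (y - y0) * (M / t) * (q - p + 2 * c).
Proof.
  assert (Hc : 0 < c) by (apply step_pos; assumption).
  assert (0 < M / t) by (apply Rdiv_lt_0_compat; [pose proof M_ge_1|]; lra).
  apply grid_weighted_sum_bound; try lra;
    [apply Rmult_le_pos; [apply Rabs_pos | lra] |
     intros; apply (plateau_abs_le_1 g p (Some q)), hg |
     intros; apply (plateau_outside g p q); assumption |].
  intros i _ Hz. destruct (window_dist _ Hz) as [Hz1 Hz2].
  eapply Rle_trans; [apply gauss_sub_abs_le; eassumption|].
  replace (y1 + 2 * c * INR i - y - (y1 + 2 * c * INR i - y0)) with (- (y - y0)) by ring.
  rewrite Rabs_Ropp. lra.
Qed.

Lemma gauss_sum_riemann_term :
  Rabs (grid_sum y1 (2 * c) n (fun z => 2 * c * gauss t y0 z * g z) - RInt (gauss t y0) p q) <=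
  M / t * (2 * c) / 2 * (q - p + 2 * c) + 8 * (2 * c).
Proof.
  assert (Hc : 0 < c) by (apply step_pos; assumption).
  assert (0 < M / t) by (apply Rdiv_lt_0_compat; [pose proof M_ge_1|]; lra).
  apply riemann_grid_error; try assumption; try lra.
  - intros; apply ex_RInt_gauss.
  - intros; apply gauss_abs_le_1, ht.
  - intros z1 z2 Hz1 Hz2.
    destruct (window_dist _ Hz1) as [_ H1]. destruct (window_dist _ Hz2) as [_ H2].
    eapply Rle_trans; [apply gauss_sub_abs_le; eassumption|].
    replace (z1 - y0 - (z2 - y0)) with (z1 - z2) by ring. lra.
  - unfold y1. lra.
  - unfold y1. lra.
Qed.

(* The three terms are the error of the local limit theorem, the shift of the centre from
   [y] to [y0], and the Riemann sum error. *)
Lemma gauss_sum_error :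
  Rabs (gauss_sum t n y g - RInt (gauss t y0) p q) <=
  ((3 + M / t) * (q - p + 1) + 16) * (lclt_error K n + Rabs (y - y0) + c).
Proof.
  assert (Hc : 0 < c) by (apply step_pos; assumption).
  assert (HK : 0 < K) by (apply Rdiv_lt_0_compat; [pose proof M_ge_1 | apply sqrt_lt_R0]; lra).
  assert (0 < M / t) by (apply Rdiv_lt_0_compat; [pose proof M_ge_1|]; lra).
  pose proof gauss_sum_lclt_term as T1. pose proof gauss_sum_shift_term as T2.
  pose proof gauss_sum_riemann_term as T3.
  rewrite gauss_sum_grid. fold c y1.
  rewrite (sum_eq _ (fun i =>
     2 * c * (binom n i / binom n (n / 2) - gauss t y (y1 + 2 * c * INR i)) *
       g (y1 + 2 * c * INR i) +
     2 * c * (gauss t y (y1 + 2 * c * INR i) - gauss t y0 (y1 + 2 * c * INR i)) *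
       g (y1 + 2 * c * INR i) +
     2 * c * gauss t y0 (y1 + 2 * c * INR i) * g (y1 + 2 * c * INR i))) by (intros; ring).
  rewrite !sum_plus. fold (grid_sum y1 (2 * c) n (fun z => 2 * c * gauss t y0 z * g z)).
  match goal with |- Rabs (?A + ?B + ?C - ?I) <= _ =>
    assert (Rabs (A + B + C - I) <= Rabs A + Rabs B + Rabs (C - I))
      by (replace (A + B + C - I) with (A + B + (C - I)) by ring;
          eapply Rle_trans; [apply Rabs_triang|]; apply Rplus_le_compat_r, Rabs_triang)
  end.
  set (W := q - p + 1). set (a := Rabs (y - y0)) in *. set (e := lclt_error K n) in *.
  assert (0 <= a) by apply Rabs_pos. assert (0 <= e) by (apply lclt_error_ge0; assumption).
  assert (3 * e * (q - p + 2 * c) <= 3 * e * W) by (apply Rmult_le_compat_l; unfold W; lra).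
  assert (a * (M / t) * (q - p + 2 * c) <= a * (M / t) * W)
    by (apply Rmult_le_compat_l; [apply Rmult_le_pos|]; unfold W; lra).
  assert (M / t * (2 * c) / 2 * (q - p + 2 * c) <= M / t * c * W).
  { replace (M / t * (2 * c) / 2) with (M / t * c) by (field; lra).
    apply Rmult_le_compat_l; [apply Rmult_le_pos|]; unfold W; lra. }
  assert (0 <= M / t * W * e) by (apply Rmult_le_pos; [apply Rmult_le_pos|]; unfold W; lra).
  assert (0 <= W * a) by (apply Rmult_le_pos; unfold W; lra).
  assert (0 <= W * c) by (apply Rmult_le_pos; unfold W; lra).
  replace (((3 + M / t) * W + 16) * (e + a + c)) with
    (3 * e * W + a * (M / t) * W + M / t * c * W + 16 * c +
     (M / t * W * e + 16 * e + 3 * (W * a) + 16 * a + 3 * (W * c))) by ring.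
  lra.
Qed.

End GaussSumError.

Lemma eventually_large_n t K A : 0 < t -> 0 < K ->
  eventually (fun n => (1 <= n)%nat /\ K / sqrt (INR n) <= 1/2 /\ 1 <= K * sqrt (INR n) /\
                       lclt_error K n <= 1 /\ 2 * step t n <= 1 /\ A <= step t n * INR n).
Proof.
  intros ht HK. assert (Hst : 0 < sqrt t) by (apply sqrt_lt_R0; exact ht).
  assert (Hn1 : eventually (fun n => (1 <= n)%nat)) by (exists 1%nat; auto).
  repeat apply filter_and; [exact Hn1 | | | | |].
  - eapply filter_imp; [|apply (eventually_lt_lim (fun n => K * / sqrt (INR n)) 0 (1/2));
                          [apply is_lim_seq_scal_0, inv_sqrt_INR_lim | lra]].
    intros n Hn. unfold Rdiv. lra.
  - eapply filter_imp; [|apply (eventually_gt_lim (fun n => sqrt (INR n)) (/ K)), sqrt_INR_lim].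
    intros n Hn. apply (Rmult_lt_compat_l K) in Hn; [|exact HK].
    rewrite Rinv_r in Hn by (apply Rgt_not_eq, HK). lra.
  - eapply filter_imp;
      [|apply (eventually_lt_lim (lclt_error K) 0 1); [apply lclt_error_lim | lra]].
    intros; lra.
  - eapply filter_imp; [|apply (eventually_lt_lim (step t) 0 (1/2)); [apply step_lim | lra]].
    intros; lra.
  - eapply filter_imp; [|apply (filter_and _ _ Hn1
      (eventually_gt_lim (fun n => sqrt (INR n)) (A / sqrt t) sqrt_INR_lim))].
    intros n [hn Hn]. rewrite step_mul_INR by exact hn.
    apply (Rmult_lt_compat_l (sqrt t)) in Hn; [|exact Hst].
    replace (sqrt t * (A / sqrt t)) with A in Hn by (field; lra). lra.
Qed.

Lemma gauss_sum_cvg_finite t g p q (y0 : R) (y : nat -> R) :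
  0 < t -> p < q -> plateau g p (Some q) ->
  is_lim_seq y y0 -> is_lim_seq (fun n => gauss_sum t n (y n) g) (RInt (gauss t y0) p q).
Proof.
  intros ht hpq hg Hy.
  set (M := Rmax (Rabs (p - y0)) (Rabs (q - y0)) + 1). set (K := M / sqrt t).
  set (C := (3 + M / t) * (q - p + 1) + 16).
  assert (HK : 0 < K).
  { unfold K, M. apply Rdiv_lt_0_compat; [|apply sqrt_lt_R0, ht].
    pose proof (Rmax_l (Rabs (p - y0)) (Rabs (q - y0))). pose proof (Rabs_pos (p - y0)). lra. }
  pose proof (is_lim_seq_abs_sub y y0 Hy) as Hdist.
  apply (is_lim_seq_of_abs_sub_le _ (fun n => C * (lclt_error K n + Rabs (y n - y0) + step t n))).
  { apply is_lim_seq_scal_0.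
    replace (Finite 0) with (Rbar_plus (Rbar_plus 0 0) 0) by (simpl; f_equal; ring).
    apply is_lim_seq_plus'; [apply is_lim_seq_plus'|];
      [apply lclt_error_lim | exact Hdist | apply step_lim]. }
  generalize (filter_and _ _ (eventually_large_n t K (Rabs y0 + 1 + Rabs p + Rabs q) ht HK)
                             (eventually_lt_lim _ 0 1 Hdist ltac:(lra))).
  apply filter_imp. intros n ((hn & HKs & HKq & Hetan & Hcn & Hbig) & Hyn).
  pose proof (step_pos t n ht hn).
  assert (Habs : Rabs (y n) <= Rabs y0 + 1).
  { replace (y n) with (y0 + (y n - y0)) by ring. eapply Rle_trans; [apply Rabs_triang|]. lra. }
  apply Rabs_le_between in Habs.
  pose proof (proj1 (Rabs_le_between p (Rabs p)) (Rle_refl _)).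
  pose proof (proj1 (Rabs_le_between q (Rabs q)) (Rle_refl _)).
  apply gauss_sum_error; assumption || lra.
Qed.

Lemma sum_le_of_recurrence (a b : nat -> R) r n :
  a 0%nat = 0 -> a (S n) = 0 -> (forall i, (i <= n)%nat -> a (S i) <= r * a i + b i) ->
  sum_f_R0 a n <= r * sum_f_R0 a n + sum_f_R0 b n.
Proof.
  intros Ha0 Han Hrec.
  replace (sum_f_R0 a n) with (sum_f_R0 (fun i => a (S i)) n) at 1.
  - rewrite scal_sum, <- sum_plus. apply sum_Rle. intros i Hi. rewrite Rmult_comm. apply Hrec, Hi.
  - pose proof (decomp_sum a (S n) ltac:(lia)) as Hd. simpl pred in Hd.
    rewrite tech5, Han, Ha0 in Hd. lra.
Qed.

Lemma binom_succ_le_tail n i u : 0 < u <= INR n -> u < 2 * INR i - INR n ->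
  binom n (S i) <= (INR n - u) / (INR n + u) * binom n i.
Proof.
  intros [hu huN] Hi. pose proof (binom_succ_ratio n i) as Hr. rewrite S_INR in Hr.
  pose proof (pos_INR i). pose proof (binom_ge0 n i).
  assert (Hk : INR n - INR i <= (INR n - u) / (INR n + u) * (INR i + 1)).
  { replace ((INR n - u) / (INR n + u) * (INR i + 1)) with ((INR n - u) * (INR i + 1) / (INR n + u))
      by (field; lra).
    apply Rle_div_r; [lra|].
    assert (0 <= INR n * (2 * INR i - INR n - u)) by (apply Rmult_le_pos; lra). nra. }
  apply (Rmult_le_reg_l (INR i + 1)); [lra|]. rewrite Hr. nra.
Qed.

(* Beyond [(n + u) / 2] the coefficients decrease at least geometrically with ratio
   [(n - u) / (n + u)]. *)
Lemma binom_tail_sum n u : 0 < u ->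
  sum_f_R0 (fun i => if Rlt_dec u (2 * INR i - INR n) then binom n i / binom n (n / 2) else 0) n
  <= (INR n + u) / u.
Proof.
  intros hu. set (N := INR n). set (rho := fun i => binom n i / binom n (n / 2)).
  set (a := fun i => if Rlt_dec u (2 * INR i - N) then rho i else 0).
  assert (HN : 0 <= N) by apply pos_INR.
  assert (Hc : 0 < binom n (n / 2)) by (apply binom_pos, Nat.Div0.div_le_upper_bound; lia).
  assert (Hrho0 : forall i, 0 <= rho i)
    by (intros; apply Rdiv_le_0_compat; [apply binom_ge0 | lra]).
  assert (Hrho1 : forall i, rho i <= 1)
    by (intros; apply Rle_div_l; [lra | rewrite Rmult_1_l; apply binom_le_central]).
  assert (Ha0 : forall i, 0 <= a i) by (intros; unfold a; destruct Rlt_dec; [apply Hrho0 | lra]).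
  assert (Hpos : 0 <= (N + u) / u) by (apply Rdiv_le_0_compat; lra).
  destruct (Rle_dec u N) as [HuN|HuN].
  2:{ apply Rle_trans with (sum_f_R0 (fun _ => 0) n).
      - apply sum_Rle; intros i Hi. assert (INR i <= N) by (apply le_INR; exact Hi).
        destruct Rlt_dec; lra.
      - rewrite sum_cte. lra. }
  set (r := (N - u) / (N + u)).
  set (b := fun i => rho (S i) * ind (u - 2) u (- N + 2 * INR i)).
  assert (Hb : sum_f_R0 b n <= 2).
  { pose proof (grid_count_le (u - 2) u (- N) 2 n ltac:(lra) ltac:(lra)) as Hcount.
    rewrite grid_sum_scal in Hcount. unfold grid_sum in Hcount.
    apply Rle_trans with (sum_f_R0 (fun i => ind (u - 2) u (- N + 2 * INR i)) n); [|lra].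
    apply sum_Rle; intros i _. unfold b. pose proof (ind_bounds (u - 2) u (- N + 2 * INR i)).
    pose proof (Hrho0 (S i)). pose proof (Hrho1 (S i)). nra. }
  assert (Hr : 0 <= r) by (apply Rdiv_le_0_compat; lra).
  assert (Hrec : forall i, (i <= n)%nat -> a (S i) <= r * a i + b i).
  { intros i Hi. assert (Hb0 : 0 <= b i) by (apply Rmult_le_pos; [apply Hrho0 | apply ind_bounds]).
    pose proof (Ha0 i). assert (0 <= r * a i) by (apply Rmult_le_pos; lra).
    unfold a at 1. rewrite S_INR. destruct (Rlt_dec u (2 * (INR i + 1) - N)) as [H1|H1]; [|lra].
    unfold a. destruct (Rlt_dec u (2 * INR i - N)) as [H2|H2].
    - apply Rle_trans with (r * rho i); [|lra].
      unfold rho, Rdiv. rewrite <- Rmult_assoc.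
      apply Rmult_le_compat_r; [left; apply Rinv_0_lt_compat; lra|].
      apply binom_succ_le_tail; [split|]; unfold N in *; lra.
    - unfold b. rewrite ind_in by lra. lra. }
  pose proof (sum_le_of_recurrence a b r n) as Hsum.
  assert (Hsum' : sum_f_R0 a n <= r * sum_f_R0 a n + sum_f_R0 b n).
  { apply Hsum; [unfold a; simpl INR; destruct Rlt_dec; lra | | exact Hrec].
    unfold a, rho. rewrite (binom_gt n (S n)) by lia. destruct Rlt_dec; lra. }
  change (sum_f_R0 a n <= (N + u) / u). apply (Rmult_le_reg_r (1 - r)).
  - unfold r. apply (Rmult_lt_reg_r (N + u)); [lra|]. field_simplify; lra.
  - replace ((N + u) / u * (1 - r)) with 2 by (unfold r; field; lra). lra.
Qed.

Lemma gauss_sum_tail t n y Q g : 0 < t -> (1 <= n)%nat -> y < Q -> (forall z, 0 <= g z <= 1) ->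
  0 <= gauss_sum t n y (fun z => if Rle_dec z Q then 0 else g z) <= 2 * (t / (Q - y) + step t n).
Proof.
  intros ht hn hQ hg.
  assert (hc : 0 < step t n) by (apply step_pos; assumption).
  assert (Hcb : 0 < binom n (n / 2)) by (apply binom_pos, Nat.Div0.div_le_upper_bound; lia).
  assert (HN : 0 < INR n) by (apply lt_0_INR; lia).
  pose proof (step_sq t n ht hn) as Hsq.
  rewrite gauss_sum_grid. set (c := step t n) in *. set (u := (Q - y) / c).
  assert (hu : 0 < u) by (apply Rdiv_lt_0_compat; lra).
  assert (Hpt : forall i, Q < y - c * INR n + 2 * c * INR i <-> u < 2 * INR i - INR n).
  { intros i. unfold u. split; intros Hi.
    - apply (Rmult_lt_reg_r c); [lra|]. replace ((Q - y) / c * c) with (Q - y) by (field; lra). lra.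
    - apply (Rmult_lt_compat_r c) in Hi; [|lra].
      replace ((Q - y) / c * c) with (Q - y) in Hi by (field; lra). lra. }
  assert (Hrho : forall i, 0 <= 2 * c * (binom n i / binom n (n / 2)))
    by (intros; apply Rmult_le_pos; [lra | apply Rdiv_le_0_compat; [apply binom_ge0 | lra]]).
  split.
  - apply cond_pos_sum; intros i. apply Rmult_le_pos; [apply Hrho|].
    destruct Rle_dec; [lra | apply hg].
  - apply Rle_trans with (2 * c * sum_f_R0 (fun i =>
      if Rlt_dec u (2 * INR i - INR n) then binom n i / binom n (n / 2) else 0) n).
    + rewrite scal_sum. apply sum_Rle; intros i _. specialize (Hrho i). specialize (Hpt i).
      pose proof (hg (y - c * INR n + 2 * c * INR i)).
      destruct Rle_dec as [H1|H1], Rlt_dec as [H2|H2]; [lra | lra | nra |].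
      exfalso. apply H2, Hpt. lra.
    + eapply Rle_trans; [apply Rmult_le_compat_l; [lra | apply binom_tail_sum, hu]|].
      right. unfold u. replace t with (c * c * INR n) by (rewrite Hsq; field; lra). field. lra.
Qed.

Lemma plateau_truncate g p Q : plateau g p None -> p < Q ->
  plateau (fun z => if Rle_dec z Q then g z else 0) p (Some Q).
Proof.
  intros [hg01 [hg_lo hg_hi]] hpQ. split; [|split].
  - intros z. destruct Rle_dec; [apply hg01 | lra].
  - intros z Hz. destruct Rle_dec; [apply hg_lo, Hz | reflexivity].
  - intros z Hz. split; intros HzQ; destruct Rle_dec; (apply hg_hi, Hz) || reflexivity || lra.
Qed.

Lemma gauss_sum_cvg_infinite t g p (y0 : R) (y : nat -> R) L : 0 < t -> plateau g p None ->
  is_lim_seq y y0 ->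
  (forall eps, 0 < eps -> exists M, forall B, B >= M -> Rabs (RInt (gauss t y0) p B - L) < eps) ->
  is_lim_seq (fun n => gauss_sum t n (y n) g) L.
Proof.
  intros ht hg Hy HL. apply is_lim_seq_approx. intros eps Heps.
  destruct (HL eps Heps) as [M HM].
  set (Q := Rmax (Rmax (p + 1) (y0 + 1 + 4 * t / eps)) M).
  pose proof (Rmax_l (Rmax (p + 1) (y0 + 1 + 4 * t / eps)) M) as HQ1.
  pose proof (Rmax_r (Rmax (p + 1) (y0 + 1 + 4 * t / eps)) M) as HQ2.
  pose proof (Rmax_l (p + 1) (y0 + 1 + 4 * t / eps)) as HQ3.
  pose proof (Rmax_r (p + 1) (y0 + 1 + 4 * t / eps)) as HQ4. fold Q in HQ1, HQ2.
  assert (Htq : 0 < 4 * t / eps) by (apply Rdiv_lt_0_compat; lra).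
  exists (fun n => gauss_sum t n (y n) (fun z => if Rle_dec z Q then g z else 0)),
         (RInt (gauss t y0) p Q).
  split; [|split].
  - apply gauss_sum_cvg_finite; [exact ht | lra | | exact Hy].
    apply plateau_truncate; [exact hg | lra].
  - left. apply HM. lra.
  - assert (Hall : eventually (fun n => (1 <= n)%nat /\ Rabs (y n - y0) < 1 /\ step t n < eps / 4)).
    { repeat apply filter_and; [exists 1%nat; auto | |];
        (apply (eventually_lt_lim _ 0); [apply is_lim_seq_abs_sub, Hy || apply step_lim | lra]). }
    eapply filter_imp; [|exact Hall]. intros n (hn & Hyn & Hcn).
    pose proof hg as [hg01 _]. apply Rabs_lt_between' in Hyn.
    rewrite (gauss_sum_ext t n (y n) g (fun z => (if Rle_dec z Q then g z else 0) +
                                             (if Rle_dec z Q then 0 else g z)))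
      by (intros z; destruct Rle_dec; ring).
    rewrite gauss_sum_plus.
    match goal with |- Rabs (?A + ?B - ?A) <= _ => replace (A + B - A) with B by ring end.
    destruct (gauss_sum_tail t n (y n) Q g ht hn ltac:(lra) hg01) as [Hlo Hhi].
    rewrite Rabs_pos_eq by exact Hlo.
    assert (t / (Q - y n) <= eps / 4).
    { apply Rle_div_l; [lra|]. apply (Rmult_le_reg_l (4 / eps)); [apply Rdiv_lt_0_compat; lra|].
      replace (4 / eps * t) with (4 * t / eps) by (field; lra).
      replace (4 / eps * (eps / 4 * (Q - y n))) with (Q - y n) by (field; lra). lra. }
    lra.
Qed.

Lemma mirror_lim x t : 0 < x -> 0 < t -> is_lim_seq (mirror x t) (- x).
Proof.
  intros hx ht. apply (is_lim_seq_of_abs_sub_le _ (fun n => 2 * step t n)).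
  - replace (Finite 0) with (Rbar_mult 2 0) by (simpl; f_equal; ring).
    apply is_lim_seq_scal_l, step_lim.
  - exists 1%nat. intros n hn. unfold mirror.
    destruct (barrier_bounds x (step t n) hx (step_pos t n ht hn)).
    apply Rabs_le_between'. lra.
Qed.

Lemma plateau_pos : plateau (on_pos (fun _ => 1)) 0 None.
Proof.
  unfold on_pos. split; [|split]; intros y; destruct Rlt_dec; intros; lra.
Qed.

Lemma plateau_range a b : 0 <= a -> ext_lt a b -> plateau (on_pos (range_ind a b)) a b.
Proof.
  intros ha hab. unfold on_pos, range_ind. split; [|split]; intros y.
  - destruct Rlt_dec; [destruct (in_range a b y)|]; lra.
  - intros Hy. destruct Rlt_dec; [|reflexivity].
    unfold in_range, Rleb. destruct (Rle_dec a y); [lra | reflexivity].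
  - intros Hy. destruct Rlt_dec; [|lra]. unfold in_range, Rleb.
    destruct (Rle_dec a y); [|lra]. simpl.
    destruct b as [b'|]; [|reflexivity].
    split; intros; destruct Rle_dec; first [reflexivity | lra].
Qed.

Lemma Rdiv_mult_cancel_l k u v : k <> 0 -> k * u / (k * v) = u / v.
Proof.
  intros hk. destruct (Req_dec v 0) as [->|hv].
  - unfold Rdiv. rewrite Rmult_0_r, Rinv_0, !Rmult_0_r. reflexivity.
  - field. split; assumption.
Qed.

Lemma Pn_gauss_sum_ratio x t n a b : 0 < x -> 0 < t -> (1 <= n)%nat ->
  Pn x t n a b =
  (gauss_sum t n x (on_pos (range_ind a b)) -
   gauss_sum t n (mirror x t n) (on_pos (range_ind a b))) /
  (gauss_sum t n x (on_pos (fun _ => 1)) - gauss_sum t n (mirror x t n) (on_pos (fun _ => 1))).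
Proof.
  intros hx ht hn. rewrite Pn_reflection by assumption. unfold gauss_sum.
  rewrite <- !Rmult_minus_distr_l, Rdiv_mult_cancel_l; [reflexivity|].
  apply Rgt_not_eq, Rdiv_lt_0_compat.
  - pose proof (step_pos t n ht hn); lra.
  - apply binom_pos, Nat.Div0.div_le_upper_bound; lia.
Qed.

Lemma Pn_cvg x t a b (Nx Nm Dx Dm : R) : 0 < x -> 0 < t ->
  is_lim_seq (fun n => gauss_sum t n x (on_pos (range_ind a b))) Nx ->
  is_lim_seq (fun n => gauss_sum t n (mirror x t n) (on_pos (range_ind a b))) Nm ->
  is_lim_seq (fun n => gauss_sum t n x (on_pos (fun _ => 1))) Dx ->
  is_lim_seq (fun n => gauss_sum t n (mirror x t n) (on_pos (fun _ => 1))) Dm ->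
  Dx - Dm <> 0 ->
  is_lim_seq (fun n => Pn x t n a b) ((Nx - Nm) / (Dx - Dm)).
Proof.
  intros hx ht HNx HNm HDx HDm HD.
  apply (is_lim_seq_ext_loc (fun n =>
    (gauss_sum t n x (on_pos (range_ind a b)) -
     gauss_sum t n (mirror x t n) (on_pos (range_ind a b))) /
    (gauss_sum t n x (on_pos (fun _ => 1)) - gauss_sum t n (mirror x t n) (on_pos (fun _ => 1))))).
  - exists 1%nat. intros n hn. symmetry. apply Pn_gauss_sum_ratio; assumption.
  - apply is_lim_seq_div'; [apply is_lim_seq_minus'.. | exact HD]; assumption.
Qed.

Section Heat.

Variables x t : R.
Hypotheses (hx : 0 < x) (ht : 0 < t).

Let k := / sqrt (2 * PI * t).

Lemma k_pos : 0 < k.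
Proof. apply Rinv_0_lt_compat, sqrt_lt_R0. pose proof PI_RGT_0. nra. Qed.

Lemma H_eq_gauss y : H t x y = k * (gauss t x y - gauss t (- x) y).
Proof.
  unfold H, G, gauss, k. rewrite Rmult_minus_distr_l.
  replace ((- y - x) ^ 2) with ((y - - x) ^ 2) by ring. reflexivity.
Qed.

Lemma ex_RInt_H a b : ex_RInt (H t x) a b.
Proof.
  apply (ex_RInt_ext (fun y => k * (gauss t x y - gauss t (- x) y))).
  { intros; symmetry; apply H_eq_gauss. }
  apply (ex_RInt_scal (fun y => gauss t x y - gauss t (- x) y)).
  apply (ex_RInt_minus (gauss t x) (gauss t (- x))); apply ex_RInt_gauss.
Qed.

Lemma RInt_H a b : RInt (H t x) a b = k * (RInt (gauss t x) a b - RInt (gauss t (- x)) a b).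
Proof.
  rewrite (RInt_ext _ (fun y => k * (gauss t x y - gauss t (- x) y))) by (intros; apply H_eq_gauss).
  replace (RInt (gauss t x) a b - RInt (gauss t (- x)) a b)
    with (RInt (fun y => gauss t x y - gauss t (- x) y) a b)
    by (apply (RInt_minus (gauss t x) (gauss t (- x))); apply ex_RInt_gauss).
  exact (RInt_scal (fun y => gauss t x y - gauss t (- x) y) a b k
           (ex_RInt_minus (gauss t x) (gauss t (- x)) a b
              (ex_RInt_gauss _ _ _ _) (ex_RInt_gauss _ _ _ _))).
Qed.

Lemma is_RInt_H a b : is_RInt (H t x) a b (k * (RInt (gauss t x) a b - RInt (gauss t (- x)) a b)).
Proof.
  rewrite <- RInt_H. exists (ex_RInt_Reals_0 _ _ _ (ex_RInt_H a b)). symmetry. apply RInt_Reals.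
Qed.

Lemma is_RInt_infty_H p Lx Lm :
  (forall eps, 0 < eps -> exists M, forall B, B >= M -> Rabs (RInt (gauss t x) p B - Lx) < eps) ->
  (forall eps, 0 < eps ->
     exists M, forall B, B >= M -> Rabs (RInt (gauss t (- x)) p B - Lm) < eps) ->
  is_RInt_infty (H t x) p (k * (Lx - Lm)).
Proof.
  intros HLx HLm eps Heps. pose proof k_pos as hk.
  assert (He : 0 < eps / (2 * k)) by (apply Rdiv_lt_0_compat; lra).
  destruct (HLx _ He) as [M1 HM1]. destruct (HLm _ He) as [M2 HM2].
  exists (Rmax M1 M2). intros B HB. eexists. split; [apply is_RInt_H|].
  specialize (HM1 B ltac:(pose proof (Rmax_l M1 M2); lra)).
  specialize (HM2 B ltac:(pose proof (Rmax_r M1 M2); lra)).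
  replace (k * (RInt (gauss t x) p B - RInt (gauss t (- x)) p B) - k * (Lx - Lm))
    with (k * ((RInt (gauss t x) p B - Lx) - (RInt (gauss t (- x)) p B - Lm))) by ring.
  rewrite Rabs_mult, (Rabs_pos_eq k) by lra.
  pose proof (Rabs_sub_le (RInt (gauss t x) p B - Lx) (RInt (gauss t (- x)) p B - Lm)).
  replace eps with (k * (eps / (2 * k) + eps / (2 * k))) by (field; lra).
  apply Rmult_lt_compat_l; lra.
Qed.

Lemma gauss_mirror_lt y : 0 < y -> gauss t (- x) y < gauss t x y.
Proof.
  intros hy. unfold gauss. apply exp_increasing. unfold Rdiv.
  apply Rmult_lt_compat_r; [apply Rinv_0_lt_compat; lra | nra].
Qed.

(* Positivity of the limit: the integrand is positive on [0, x + 1], and the tail bound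
   of [gauss_improper] controls the rest. *)
Lemma gauss_improper_diff_pos Lx Lm :
  (forall Q, Rmax 0 x < Q -> 0 <= Lx - RInt (gauss t x) 0 Q <= t / (Q - x)) ->
  (forall Q, Rmax 0 (- x) < Q -> 0 <= Lm - RInt (gauss t (- x)) 0 Q <= t / (Q - - x)) ->
  0 < Lx - Lm.
Proof.
  intros HLx HLm.
  set (d := RInt (gauss t x) 0 (x + 1) - RInt (gauss t (- x)) 0 (x + 1)).
  assert (Hd : 0 < d).
  { unfold d. apply Rlt_0_minus, RInt_lt; [lra | | | intros y Hy; apply gauss_mirror_lt; lra];
      intros; apply gauss_continuous. }
  set (Q := x + 1 + 2 * t / d).
  assert (0 < 2 * t / d) by (apply Rdiv_lt_0_compat; lra).
  assert (HQ : x + 1 <= Q) by (unfold Q; lra).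
  destruct (HLx Q) as [Hx _]; [unfold Rmax; destruct Rle_dec; lra|].
  destruct (HLm Q) as [_ Hm]; [unfold Rmax; destruct Rle_dec; lra|].
  assert (Hmono : d <= RInt (gauss t x) 0 Q - RInt (gauss t (- x)) 0 Q).
  { pose proof (RInt_Chasles_sub (gauss t x) 0 (x + 1) Q (ex_RInt_gauss t x)).
    pose proof (RInt_Chasles_sub (gauss t (- x)) 0 (x + 1) Q (ex_RInt_gauss t (- x))).
    assert (RInt (gauss t (- x)) (x + 1) Q <= RInt (gauss t x) (x + 1) Q).
    { apply RInt_le; [exact HQ | apply ex_RInt_gauss | apply ex_RInt_gauss |].
      intros y Hy. left. apply gauss_mirror_lt. lra. }
    unfold d. lra. }
  assert (t / (Q - - x) <= d / 2).
  { apply Rle_div_l; [lra|]. unfold Q.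
    replace (d / 2 * (x + 1 + 2 * t / d - - x)) with (d / 2 * (2 * x + 1) + t) by (field; lra).
    nra. }
  lra.
Qed.

Lemma numerator_cvg a b : 0 <= a -> ext_lt a b ->
  exists Nx Nm : R, is_RInt_ext (H t x) a b (k * (Nx - Nm)) /\
    is_lim_seq (fun n => gauss_sum t n x (on_pos (range_ind a b))) Nx /\
    is_lim_seq (fun n => gauss_sum t n (mirror x t n) (on_pos (range_ind a b))) Nm.
Proof.
  intros ha hab. pose proof (plateau_range a b ha hab) as hg.
  pose proof (mirror_lim x t hx ht) as Hmir. pose proof (is_lim_seq_const x) as Hx.
  destruct b as [b'|].
  - simpl in hab. exists (RInt (gauss t x) a b'), (RInt (gauss t (- x)) a b').
    split; [apply is_RInt_H|]. split; apply gauss_sum_cvg_finite; assumption.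
  - destruct (gauss_improper t ht x a) as [Nx [HNx _]].
    destruct (gauss_improper t ht (- x) a) as [Nm [HNm _]].
    exists Nx, Nm. split; [apply is_RInt_infty_H; assumption|].
    split; eapply gauss_sum_cvg_infinite; eassumption.
Qed.

Lemma denominator_cvg : exists Dx Dm : R,
  is_RInt_infty (H t x) 0 (k * (Dx - Dm)) /\ 0 < Dx - Dm /\
  is_lim_seq (fun n => gauss_sum t n x (on_pos (fun _ => 1))) Dx /\
  is_lim_seq (fun n => gauss_sum t n (mirror x t n) (on_pos (fun _ => 1))) Dm.
Proof.
  pose proof (mirror_lim x t hx ht) as Hmir. pose proof (is_lim_seq_const x) as Hx.
  destruct (gauss_improper t ht x 0) as [Dx [HDx HDx_tail]].
  destruct (gauss_improper t ht (- x) 0) as [Dm [HDm HDm_tail]].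
  exists Dx, Dm. split; [apply is_RInt_infty_H; assumption|].
  split; [apply gauss_improper_diff_pos; assumption|].
  split; eapply gauss_sum_cvg_infinite; (eassumption || apply plateau_pos).
Qed.

End Heat.

Theorem mainTheorem1 (x t : R) (hx : 0 < x) (ht : 0 < t)
  (a : R) (b : option R) (ha : 0 <= a) (hab : ext_lt a b) :
  exists num den : R,
    is_RInt_ext (H t x) a b num /\
    is_RInt_infty (H t x) 0 den /\
    Un_cv (fun n => Pn x t n a b) (num / den).
Proof.
  destruct (numerator_cvg x t hx ht a b ha hab) as (Nx & Nm & Hnum & HNx & HNm).
  destruct (denominator_cvg x t hx ht) as (Dx & Dm & Hden & Hpos & HDx & HDm).
  exists (/ sqrt (2 * PI * t) * (Nx - Nm)), (/ sqrt (2 * PI * t) * (Dx - Dm)).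
  split; [exact Hnum|]. split; [exact Hden|].
  rewrite Rdiv_mult_cancel_l by (apply Rgt_not_eq, k_pos, ht).
  apply is_lim_seq_Reals, Pn_cvg; try assumption. lra.
Qed.
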